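(* Let $\mathcal A$ be a unital C$^*$-algebra generated (as a C$^*$-algebra) by self-adjoint elements $y_1,\ldots,y_p$. Let $\mathcal A_1\subseteq\mathcal A_2\subseteq\cdots$ be an increasing sequence of unital C$^*$-subalgebras of $\mathcal A$ whose union $\bigcup_j\mathcal A_j$ is norm dense in $\mathcal A$, and for each $j$ let $x_1^{(j)},\ldots,x_{n_j}^{(j)}$ be a finite family of self-adjoint elements generating $\mathcal A_j$. Then $$\mathfrak K_{top}^{(2)}(y_1,\ldots,y_p)\le\liminf_{j\to\infty}\mathfrak K_{top}^{(2)}(x_1^{(j)},\ldots,x_{n_j}^{(j)}).$$
   Context: Microstates. Let $\mathcal A$ be a unital C$^*$-algebra and $x_1,\dots,x_n$ self-adjoint elements of $\mathcal A$. Let $\{P_r\}_{r\ge1}$ enumerate all noncommutative polynomials in the indeterminates $X_1,\dots,X_n$ whose coefficients have rational real and imaginary parts (constants allowed). $\mathcal M_k^{s.a.}(\mathbb C)$ is the set of self-adjoint $k\times k$ complex matrices and $\tau_k=\frac1k\mathrm{Tr}$. For $R,\epsilon>0$ and $r,k\in\mathbb N$, $\Gamma_R^{(top)}(x_1,\dots,x_n;k,\epsilon,P_1,\dots,P_r)$ is the set of $(A_1,\dots,A_n)\in\mathcal M_k^{s.a.}(\mathbb C)^n$ with $\max_i\|A_i\|\le R$ and $\big|\|P_j(A_1,\dots,A_n)\|-\|P_j(x_1,\dots,x_n)\|\big|\le\epsilon$ for $1\le j\le r$. Covering numbers. On $\mathcal M_k(\mathbb C)^n$ put $\|(A_i)\|_2=(\sum_i\tau_k(A_i^*A_i))^{1/2}$.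 The $\omega$-orbit ball centred at $(B_i)$ is the set of $(A_i)$ such that some unitary $W\in\mathcal M_k(\mathbb C)$ satisfies $\|(A_i)-(WB_iW^* )\|_2<\omega$; for $\Sigma\subseteq\mathcal M_k(\mathbb C)^n$, $o_2(\Sigma,\omega)$ is the minimal number of $\omega$-orbit balls centred at points of $\Sigma$ covering $\Sigma$. Convention $\log 0=-\infty$. Topological orbit dimension: $\mathfrak K^{(2)}_{top}(x_1,\dots,x_n;\omega)=\sup_{R>0}\inf_{\epsilon>0,r\in\mathbb N}\limsup_{k\to\infty}\frac{\log o_2(\Gamma_R^{(top)}(x_1,\dots,x_n;k,\epsilon,P_1,\dots,P_r),\omega)}{k^2}$ and $\mathfrak K_{top}^{(2)}(x_1,\dots,x_n)=\limsup_{\omega\to0^+}\mathfrak K_{top}^{(2)}(x_1,\dots,x_n;\omega)$. *)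

From Stdlib Require Import Reals QArith Qreals List ClassicalEpsilon.
Open Scope R_scope.

Definition C : Type := (R * R)%type.
Definition Cre (z : C) : R := fst z.
Definition C0 : C := (0, 0).
Definition C1 : C := (1, 0).
Definition RtoC (r : R) : C := (r, 0).
Definition Cadd (z w : C) : C := (fst z + fst w, snd z + snd w).
Definition Cmul (z w : C) : C :=
  (fst z * fst w - snd z * snd w, fst z * snd w + snd z * fst w).
Definition Cconj (z : C) : C := (fst z, - snd z).
Definition Cmod (z : C) : R := sqrt (fst z ^ 2 + snd z ^ 2).
Definition QtoC (q : Q * Q) : C := (Q2R (fst q), Q2R (snd q)).

Inductive Rbar : Type := Fin (r : R) | PInf | MInf.
Definition Rbar_le (x y : Rbar) : Prop :=
  match x, y with
  | MInf, _ => True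
  | _, PInf => True
  | Fin a, Fin b => a <= b
  | _, _ => False
  end.
Definition is_lub_Rbar (S : Rbar -> Prop) (l : Rbar) : Prop :=
  (forall x, S x -> Rbar_le x l) /\
  (forall u, (forall x, S x -> Rbar_le x u) -> Rbar_le l u).
Definition is_glb_Rbar (S : Rbar -> Prop) (l : Rbar) : Prop :=
  (forall x, S x -> Rbar_le l x) /\
  (forall u, (forall x, S x -> Rbar_le u x) -> Rbar_le u l).
(* Rbar is a complete lattice, so these are the true sup / inf *)
Definition Rbar_sup (S : Rbar -> Prop) : Rbar :=
  epsilon (inhabits MInf) (fun l => is_lub_Rbar S l).
Definition Rbar_inf (S : Rbar -> Prop) : Rbar :=
  epsilon (inhabits MInf) (fun l => is_glb_Rbar S l).
Definition Rbar_real (x : Rbar) : R := match x with Fin r => r | _ => 0 end.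

Definition Rbar_limsup_seq (u : nat -> Rbar) : Rbar :=
  Rbar_inf (fun w => exists m : nat,
     w = Rbar_sup (fun v => exists k : nat, (m <= k)%nat /\ v = u k)).
Definition Rbar_liminf_seq (u : nat -> Rbar) : Rbar :=
  Rbar_sup (fun w => exists m : nat,
     w = Rbar_inf (fun v => exists k : nat, (m <= k)%nat /\ v = u k)).

Fixpoint Rsum (k : nat) (f : nat -> R) : R :=
  match k with O => 0 | S k' => Rsum k' f + f k' end.
Fixpoint Csum (k : nat) (f : nat -> C) : C :=
  match k with O => C0 | S k' => Cadd (Csum k' f) (f k') end.

(* ---------- k x k complex matrices (entries with indices < k are relevant) ---------- *)
Definition Mat : Type := nat -> nat -> C.
Definition Mid : Mat := fun a b => if Nat.eqb a b then C1 else C0.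
Definition Madd (A B : Mat) : Mat := fun a b => Cadd (A a b) (B a b).
Definition Mscal (c : C) (A : Mat) : Mat := fun a b => Cmul c (A a b).
Definition Mmul (k : nat) (A B : Mat) : Mat :=
  fun a b => Csum k (fun c => Cmul (A a c) (B c b)).
Definition Madj (A : Mat) : Mat := fun a b => Cconj (A b a).
Definition Mtrace (k : nat) (A : Mat) : C := Csum k (fun a => A a a).
Definition tau (k : nat) (A : Mat) : C := Cmul (RtoC (/ INR k)) (Mtrace k A).

Definition vnorm (k : nat) (v : nat -> C) : R := sqrt (Rsum k (fun a => Cmod (v a) ^ 2)).
Definition Mvec (k : nat) (A : Mat) (v : nat -> C) : nat -> C :=
  fun a => Csum k (fun c => Cmul (A a c) (v c)).
Definition opnorm (k : nat) (A : Mat) : R :=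
  Rbar_real (Rbar_sup (fun s => exists v : nat -> C,
      vnorm k v <= 1 /\ s = Fin (vnorm k (Mvec k A v)))).

Definition selfadj (k : nat) (A : Mat) : Prop :=
  forall a b, (a < k)%nat -> (b < k)%nat -> A a b = Cconj (A b a).
Definition unitary (k : nat) (W : Mat) : Prop :=
  forall a b, (a < k)%nat -> (b < k)%nat -> Mmul k (Madj W) W a b = Mid a b.

(* n-tuples of matrices (components with index < n are relevant) *)
Definition MTuple : Type := nat -> Mat.
Definition Tsub (A B : MTuple) : MTuple := fun i => Madd (A i) (Mscal (-1, 0) (B i)).
Definition norm2 (k n : nat) (A : MTuple) : R :=
  sqrt (Rsum n (fun i => Cre (tau k (Mmul k (Madj (A i)) (A i))))).

Definition orbit_ball (k n : nat) (omega : R) (B : MTuple) : MTuple -> Prop :=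
  fun A => exists W : Mat, unitary k W /\
     norm2 k n (Tsub A (fun i => Mmul k (Mmul k W (B i)) (Madj W))) < omega.
Definition covers (k n : nat) (Sig : MTuple -> Prop) (omega : R) (N : nat) : Prop :=
  exists L : list MTuple, length L = N /\ (forall B, In B L -> Sig B) /\
    (forall A, Sig A -> exists B, In B L /\ orbit_ball k n omega B A).
Definition o2 (k n : nat) (Sig : MTuple -> Prop) (omega : R) : nat :=
  epsilon (inhabits 0%nat) (fun N => covers k n Sig omega N /\
     forall M, covers k n Sig omega M -> (N <= M)%nat).

Inductive ncpoly : Type :=
| PVar (i : nat)
| PConst (c : Q * Q)
| PAdd (P1 P2 : ncpoly)
| PMul (P1 P2 : ncpoly).
Fixpoint wf (n : nat) (P : ncpoly) : Prop :=
  match P with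
  | PVar i => (i < n)%nat
  | PConst _ => True
  | PAdd P1 P2 => wf n P1 /\ wf n P2
  | PMul P1 P2 => wf n P1 /\ wf n P2
  end.
Fixpoint evalM (k : nat) (A : MTuple) (P : ncpoly) : Mat :=
  match P with
  | PVar i => A i
  | PConst c => Mscal (QtoC c) Mid
  | PAdd P1 P2 => Madd (evalM k A P1) (evalM k A P2)
  | PMul P1 P2 => Mmul k (evalM k A P1) (evalM k A P2)
  end.

Record CStarAlgebra : Type := {
  car :> Type;
  zero : car; one : car;
  add : car -> car -> car; opp : car -> car; mul : car -> car -> car;
  scal : C -> car -> car; star : car -> car; norm : car -> R;
  add_assoc : forall x y z, add x (add y z) = add (add x y) z;
  add_comm : forall x y, add x y = add y x;
  add_zero : forall x, add zero x = x;
  add_opp : forall x, add (opp x) x = zero;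
  scal_one : forall x, scal C1 x = x;
  scal_mul : forall a b x, scal a (scal b x) = scal (Cmul a b) x;
  scal_addl : forall a b x, scal (Cadd a b) x = add (scal a x) (scal b x);
  scal_addr : forall a x y, scal a (add x y) = add (scal a x) (scal a y);
  mul_assoc : forall x y z, mul x (mul y z) = mul (mul x y) z;
  mul_onel : forall x, mul one x = x;
  mul_oner : forall x, mul x one = x;
  mul_addl : forall x y z, mul (add x y) z = add (mul x z) (mul y z);
  mul_addr : forall x y z, mul x (add y z) = add (mul x y) (mul x z);
  mul_scall : forall a x y, mul (scal a x) y = scal a (mul x y);
  mul_scalr : forall a x y, mul x (scal a y) = scal a (mul x y);
  star_add : forall x y, star (add x y) = add (star x) (star y);
  star_scal : forall a x, star (scal a x) = scal (Cconj a) (star x);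
  star_mul : forall x y, star (mul x y) = mul (star y) (star x);
  star_star : forall x, star (star x) = x;
  norm_eq0 : forall x, norm x = 0 -> x = zero;
  norm_triangle : forall x y, norm (add x y) <= norm x + norm y;
  norm_scal : forall a x, norm (scal a x) = Cmod a * norm x;
  norm_mul : forall x y, norm (mul x y) <= norm x * norm y;
  norm_cstar : forall x, norm (mul (star x) x) = norm x * norm x;
  complete : forall u : nat -> car,
    (forall eps, 0 < eps -> exists N, forall m p, (N <= m)%nat -> (N <= p)%nat ->
        norm (add (u m) (opp (u p))) < eps) ->
    exists l, forall eps, 0 < eps -> exists N, forall m, (N <= m)%nat ->
        norm (add (u m) (opp l)) < eps
}.

Arguments zero {c}. Arguments one {c}. Arguments add {c}. Arguments opp {c}.
Arguments mul {c}. Arguments scal {c}. Arguments star {c}. Arguments norm {c}.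

Definition cdist {Alg : CStarAlgebra} (a b : Alg) : R := norm (add a (opp b)).

Definition is_unital_csub {Alg : CStarAlgebra} (S : Alg -> Prop) : Prop :=
  S one /\
  (forall a b, S a -> S b -> S (add a b)) /\
  (forall c a, S a -> S (scal c a)) /\
  (forall a b, S a -> S b -> S (mul a b)) /\
  (forall a, S a -> S (star a)) /\
  (forall a, (forall eps, 0 < eps -> exists b, S b /\ cdist a b < eps) -> S a).

Definition generated {Alg : CStarAlgebra} (n : nat) (x : nat -> Alg) : Alg -> Prop :=
  fun a => forall S : Alg -> Prop, is_unital_csub S ->
     (forall i, (i < n)%nat -> S (x i)) -> S a.

Fixpoint evalA {Alg : CStarAlgebra} (x : nat -> Alg) (P : ncpoly) : Alg :=
  match P with
  | PVar i => x i
  | PConst c => scal (QtoC c) one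
  | PAdd P1 P2 => add (evalA x P1) (evalA x P2)
  | PMul P1 P2 => mul (evalA x P1) (evalA x P2)
  end.

(* E n : an enumeration P_1, P_2, ... (indexed from 0) of the polynomials in n indeterminates *)
Definition enumeration (E : nat -> nat -> ncpoly) : Prop :=
  forall n, (forall r, wf n (E n r)) /\ (forall P, wf n P -> exists r, E n r = P).

Definition Gamma_top {Alg : CStarAlgebra} (E : nat -> nat -> ncpoly) (n : nat)
  (x : nat -> Alg) (Rb : R) (k : nat) (eps : R) (r : nat) : MTuple -> Prop :=
  fun A =>
    (forall i, (i < n)%nat -> selfadj k (A i) /\ opnorm k (A i) <= Rb) /\
    (forall j, (j < r)%nat ->
       Rabs (opnorm k (evalM k A (E n j)) - norm (evalA x (E n j))) <= eps).

(* log N / k^2 with log 0 = -infinity *)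
Definition logratio (N k : nat) : Rbar :=
  match N with O => MInf | _ => Fin (ln (INR N) / INR (k * k)) end.

Definition Ktop_omega {Alg : CStarAlgebra} (E : nat -> nat -> ncpoly) (n : nat)
  (x : nat -> Alg) (omega : R) : Rbar :=
  Rbar_sup (fun v => exists Rb, 0 < Rb /\
    v = Rbar_inf (fun w => exists eps r, 0 < eps /\ (1 <= r)%nat /\
      w = Rbar_limsup_seq (fun k =>
            logratio (o2 k n (Gamma_top E n x Rb k eps r) omega) k))).

(* limsup as omega -> 0+ *)
Definition Ktop {Alg : CStarAlgebra} (E : nat -> nat -> ncpoly) (n : nat)
  (x : nat -> Alg) : Rbar :=
  Rbar_inf (fun w => exists delta, 0 < delta /\
    w = Rbar_sup (fun v => exists omega, 0 < omega < delta /\ v = Ktop_omega E n x omega)).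

(* Fix a scale omega > 0.  By density, for all large j every generator y_i is
   within eta of a polynomial Q_i in x^(j); since y generates A, every x^(j)_l
   is within eta of a self-adjoint polynomial S_l in y.  Sending a microstate
   A of y to Phi(A) = (S_l(A))_l produces a microstate of x^(j) (for enough
   moments and a small tolerance), and A_i stays close to Q_i(Phi(A)) in
   operator norm.  Since Q is Lipschitz for ||.||_2 on bounded tuples and
   unitary conjugation commutes with polynomials, every omega'-orbit cover of
   the x^(j)-microstates pulls back to an omega-orbit cover of the
   y-microstates with no more balls.  Hence K(y; omega) <= K(x^(j); omega')
   for all small omega', so K(y; omega) <= K(x^(j)) for all large j, and
   taking omega -> 0 gives the theorem. *)

From Stdlib Require Import Reals QArith Qreals List ClassicalEpsilon Lra Lia Psatz Classical ZArith Wf_nat.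
Open Scope R_scope.

Lemma Rbar_le_trans x y z : Rbar_le x y -> Rbar_le y z -> Rbar_le x z.
Proof. destruct x, y, z; simpl; auto; try lra; tauto. Qed.

(* Every set of extended reals has a least upper bound; the finite case is
   the completeness of R. *)
Lemma Rbar_lub_ex (S : Rbar -> Prop) : exists l, is_lub_Rbar S l.
Proof.
  destruct (classic (S PInf)) as [HP|HP].
  { exists PInf; split.
    - intros x _; destruct x; simpl; auto.
    - intros u Hu; specialize (Hu _ HP); destruct u; simpl in *; auto. }
  destruct (classic (exists x, S (Fin x))) as [[x0 Hx0]|HF].
  - destruct (classic (exists M, forall x, S (Fin x) -> x <= M)) as [[M HM]|HU].
    + assert (Hb : bound (fun x => S (Fin x))) by (exists M; intros x Hx; apply HM; auto).
      destruct (completeness (fun x => S (Fin x)) Hb (ex_intro _ x0 Hx0)) as [m [Hm1 Hm2]].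
      exists (Fin m); split.
      * intros x Hx; destruct x; simpl; auto; try (apply Hm1; auto); try contradiction.
      * intros u Hu; destruct u; simpl; auto.
        -- apply Hm2; intros x Hx; specialize (Hu _ Hx); simpl in Hu; auto.
        -- specialize (Hu _ Hx0); simpl in Hu; auto.
    + exists PInf; split.
      * intros x _; destruct x; simpl; auto.
      * intros u Hu; destruct u; simpl; auto.
        -- apply HU; exists r; intros x Hx; specialize (Hu _ Hx); simpl in Hu; auto.
        -- specialize (Hu _ Hx0); simpl in Hu; auto.
  - exists MInf; split.
    + intros x Hx; destruct x; simpl; auto; try (exfalso; apply HF; eauto); contradiction.
    + intros u _; simpl; auto.
Qed.

(* The greatest lower bound of S is the least upper bound of its lower bounds. *)
Lemma Rbar_glb_ex (S : Rbar -> Prop) : exists l, is_glb_Rbar S l.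
Proof.
  destruct (Rbar_lub_ex (fun u => forall x, S x -> Rbar_le u x)) as [l [Hub Hleast]].
  exists l; split.
  - intros x Hx; apply Hleast; intros u Hu; apply Hu; auto.
  - intros u Hu; apply Hub; auto.
Qed.

Lemma Rbar_sup_spec S : is_lub_Rbar S (Rbar_sup S).
Proof. unfold Rbar_sup. apply epsilon_spec. apply Rbar_lub_ex. Qed.
Lemma Rbar_inf_spec S : is_glb_Rbar S (Rbar_inf S).
Proof. unfold Rbar_inf. apply epsilon_spec. apply Rbar_glb_ex. Qed.

Lemma le_sup S x : S x -> Rbar_le x (Rbar_sup S).
Proof. intro H. apply (proj1 (Rbar_sup_spec S)); auto. Qed.
Lemma sup_le S u : (forall x, S x -> Rbar_le x u) -> Rbar_le (Rbar_sup S) u.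
Proof. intro H. apply (proj2 (Rbar_sup_spec S)); auto. Qed.
Lemma inf_le S x : S x -> Rbar_le (Rbar_inf S) x.
Proof. intro H. apply (proj1 (Rbar_inf_spec S)); auto. Qed.
Lemma le_inf S u : (forall x, S x -> Rbar_le u x) -> Rbar_le u (Rbar_inf S).
Proof. intro H. apply (proj2 (Rbar_inf_spec S)); auto. Qed.

Lemma limsup_mono (u v : nat -> Rbar) :
  (forall k, (1 <= k)%nat -> Rbar_le (u k) (v k)) ->
  Rbar_le (Rbar_limsup_seq u) (Rbar_limsup_seq v).
Proof.
  intro H. unfold Rbar_limsup_seq. apply le_inf. intros w [m ->].
  eapply Rbar_le_trans. { apply inf_le. exists (Nat.max m 1). reflexivity. }
  apply sup_le. intros x [k [Hk ->]].
  eapply Rbar_le_trans. { apply H. lia. }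
  apply le_sup. exists k; split; auto. lia.
Qed.

Lemma Rsum_ext k f g : (forall a, (a < k)%nat -> f a = g a) -> Rsum k f = Rsum k g.
Proof. induction k; simpl; intros; auto. rewrite IHk, H; auto. Qed.
Lemma Rsum_plus k f g : Rsum k (fun a => f a + g a) = Rsum k f + Rsum k g.
Proof. induction k; simpl; auto. lra. rewrite IHk; lra. Qed.
Lemma Rsum_scal k c f : Rsum k (fun a => c * f a) = c * Rsum k f.
Proof. induction k; simpl; auto. lra. rewrite IHk; lra. Qed.
Lemma Rsum_opp k f : Rsum k (fun a => - f a) = - Rsum k f.
Proof. induction k; simpl; auto. lra. rewrite IHk; lra. Qed.
Lemma Rsum_zero k : Rsum k (fun _ => 0) = 0.
Proof. induction k; simpl; auto. rewrite IHk; lra. Qed.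
Lemma Rsum_const k c : Rsum k (fun _ => c) = INR k * c.
Proof. induction k; simpl Rsum. simpl; lra. rewrite IHk, S_INR; lra. Qed.
Lemma Rsum_le k f g : (forall a, (a < k)%nat -> f a <= g a) -> Rsum k f <= Rsum k g.
Proof.
  induction k; simpl; intros H; [lra|].
  specialize (IHk (fun a Ha => H a ltac:(lia))). specialize (H k ltac:(lia)). lra.
Qed.
Lemma Rsum_nonneg k f : (forall a, (a < k)%nat -> 0 <= f a) -> 0 <= Rsum k f.
Proof. intro H. rewrite <- (Rsum_zero k). apply Rsum_le; auto. Qed.
Lemma Rsum_swap k m (F : nat -> nat -> R) :
  Rsum k (fun a => Rsum m (fun b => F a b)) = Rsum m (fun b => Rsum k (fun a => F a b)).
Proof. induction k; simpl. { rewrite Rsum_zero; auto. } rewrite IHk, <- Rsum_plus. auto. Qed.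
Lemma Rsum_term_le k f a :
  (forall b, (b < k)%nat -> 0 <= f b) -> (a < k)%nat -> f a <= Rsum k f.
Proof.
  induction k; intros H Ha; [lia|]. simpl.
  assert (0 <= Rsum k f) by (apply Rsum_nonneg; intros; apply H; lia).
  destruct (Nat.eq_dec a k); [subst; lra|].
  specialize (IHk (fun b Hb => H b ltac:(lia)) ltac:(lia)). specialize (H k ltac:(lia)). lra.
Qed.
Lemma Rsum_delta k b c : (b < k)%nat -> Rsum k (fun a => if Nat.eqb a b then c else 0) = c.
Proof.
  induction k; intros Hb; [lia|]. simpl. destruct (Nat.eq_dec b k).
  - subst. rewrite Nat.eqb_refl, (Rsum_ext _ _ (fun _ => 0)), Rsum_zero; [lra|].
    intros a Ha. destruct (Nat.eqb_spec a k); auto; lia.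
  - rewrite IHk by lia. destruct (Nat.eqb_spec k b); [lia|lra].
Qed.

(* Reversed forms of the linearity rules, used to push everything inside one
   sum before comparing summands. *)
Lemma Rsum_mul_r k f c : Rsum k f * c = Rsum k (fun a => f a * c).
Proof. rewrite Rmult_comm, <- Rsum_scal. apply Rsum_ext; intros; ring. Qed.
Lemma Rsum_in_scal k f c : c * Rsum k f = Rsum k (fun a => c * f a).
Proof. rewrite Rsum_scal; auto. Qed.
Lemma Rsum_in_plus k f g : Rsum k f + Rsum k g = Rsum k (fun a => f a + g a).
Proof. rewrite Rsum_plus; auto. Qed.
Lemma Rsum_in_opp k f : - Rsum k f = Rsum k (fun a => - f a).
Proof. rewrite Rsum_opp; auto. Qed.
Lemma Rsum_in_minus k f g : Rsum k f - Rsum k g = Rsum k (fun a => f a - g a).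
Proof. unfold Rminus. rewrite Rsum_in_opp, Rsum_in_plus; auto. Qed.

Lemma quadratic_discriminant A B C0 :
  0 <= A -> 0 <= C0 -> (forall t, 0 <= A + 2 * t * B + t * t * C0) -> B * B <= A * C0.
Proof.
  intros HA HC H. destruct (Req_dec C0 0) as [Hc|Hc].
  - destruct (Req_dec B 0) as [Hb|Hb]; [subst; nra|].
    specialize (H (- (A + 1) / (2 * B))). subst C0.
    replace (A + 2 * (- (A + 1) / (2 * B)) * B + - (A + 1) / (2 * B) * (- (A + 1) / (2 * B)) * 0)
      with (-1) in H by (field; auto). lra.
  - specialize (H (- B / C0)).
    replace (A + 2 * (- B / C0) * B + - B / C0 * (- B / C0) * C0)
      with ((A * C0 - B * B) / C0) in H by (field; auto).
    apply Rmult_le_compat_r with (r := C0) in H; [|lra].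
    unfold Rdiv in H. rewrite Rmult_assoc, Rinv_l in H by lra. lra.
Qed.

Lemma sqrt_sum_le a b : 0 <= a -> 0 <= b -> sqrt (a + b) <= sqrt a + sqrt b.
Proof.
  intros Ha Hb. pose proof (sqrt_pos a). pose proof (sqrt_pos b).
  apply Rsqr_incr_0_var; [|lra]. unfold Rsqr.
  rewrite sqrt_sqrt by lra.
  pose proof (sqrt_sqrt a Ha). pose proof (sqrt_sqrt b Hb). nra.
Qed.

Lemma sqrt_Rsum_le k f : (forall a, (a < k)%nat -> 0 <= f a) ->
  sqrt (Rsum k f) <= Rsum k (fun a => sqrt (f a)).
Proof.
  induction k; intros H; simpl. { rewrite sqrt_0; lra. }
  eapply Rle_trans. { apply sqrt_sum_le. apply Rsum_nonneg; intros; apply H; lia. apply H; lia. }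
  specialize (IHk (fun a Ha => H a ltac:(lia))). lra.
Qed.

Lemma sqrt_mul_le a b c : 0 <= c -> a <= b * b * c -> 0 <= b -> sqrt a <= b * sqrt c.
Proof.
  intros Hc H Hb. destruct (Rle_dec a 0).
  - rewrite sqrt_neg_0 by auto. apply Rmult_le_pos; auto; apply sqrt_pos.
  - rewrite <- (sqrt_square b) by auto. rewrite <- sqrt_mult by nra. apply sqrt_le_1_alt; lra.
Qed.

Lemma Rabs_le_inv x a : Rabs x <= a -> -a <= x <= a.
Proof. unfold Rabs; destruct (Rcase_abs x); lra. Qed.

Lemma Rabs_tri3 a b c : Rabs (a - c) <= Rabs (a - b) + Rabs (b - c).
Proof. replace (a - c) with ((a - b) + (b - c)) by ring. apply Rabs_triang. Qed.

(* Every real number is within d of a rational number of the form m/(N+1)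
   with 1/(N+1) < d. *)
Lemma Q_approx (r d : R) : 0 < d -> exists q : Q, Rabs (r - Q2R q) < d.
Proof.
  intro Hd. destruct (INR_unbounded (/ d)) as [N HN].
  set (x := r * INR (S N)). destruct (archimed x) as [H1 H2].
  exists (Qmake (up x) (Pos.of_succ_nat N)). unfold Q2R; simpl.
  rewrite Zpos_P_of_succ_nat, <- Znat.Nat2Z.inj_succ, <- INR_IZR_INZ.
  assert (HS : 0 < INR (S N)) by (apply lt_0_INR; lia).
  replace (r - IZR (up x) * / INR (S N)) with ((x - IZR (up x)) / INR (S N)) by (unfold x; field; lra).
  unfold Rdiv. rewrite Rabs_mult, (Rabs_right (/ INR (S N))) by (left; apply Rinv_0_lt_compat; auto).
  rewrite Rabs_left1 by lra.
  apply Rle_lt_trans with (1 * / INR (S N)).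
  { apply Rmult_le_compat_r; [left; apply Rinv_0_lt_compat; auto|lra]. }
  rewrite Rmult_1_l. assert (/ d < INR (S N)) by (rewrite S_INR; lra).
  rewrite <- (Rinv_inv d). apply Rinv_lt_contravar; auto.
  apply Rmult_lt_0_compat; auto. apply Rinv_0_lt_compat; auto.
Qed.

Lemma fin_choice {T : Type} (d : T) m (Rl : nat -> T -> Prop) :
  (forall i, (i < m)%nat -> exists t, Rl i t) -> exists f : nat -> T, forall i, (i < m)%nat -> Rl i (f i).
Proof.
  induction m; intros H. { exists (fun _ => d); intros; lia. }
  destruct IHm as [f Hf]. { intros; apply H; lia. }
  destruct (H m ltac:(lia)) as [t Ht].
  exists (fun i => if Nat.eqb i m then t else f i). intros i Hi.
  destruct (Nat.eqb_spec i m); [subst; auto|apply Hf; lia].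
Qed.

Lemma eventually_all m (Rl : nat -> nat -> Prop) :
  (forall i, (i < m)%nat -> exists J, forall j, (J <= j)%nat -> Rl i j) ->
  exists J, forall j, (J <= j)%nat -> forall i, (i < m)%nat -> Rl i j.
Proof.
  induction m; intros H. { exists 0%nat; intros; lia. }
  destruct IHm as [J1 H1]. { intros; apply H; lia. }
  destruct (H m ltac:(lia)) as [J2 H2].
  exists (Nat.max J1 J2). intros j Hj i Hi.
  destruct (Nat.eq_dec i m); [subst; apply H2; lia|apply H1; lia].
Qed.

Lemma Cext (z w : C) : fst z = fst w -> snd z = snd w -> z = w.
Proof. destruct z, w; simpl; intros; subst; auto. Qed.

(* The squared modulus |z|^2, which avoids square roots in computations. *)
Definition Cnorm2 (z : C) : R := fst z * fst z + snd z * snd z.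
Lemma Cnorm2_nonneg z : 0 <= Cnorm2 z.
Proof. unfold Cnorm2; nra. Qed.
Lemma Cmod_Cnorm2 z : Cmod z = sqrt (Cnorm2 z).
Proof. unfold Cmod, Cnorm2; f_equal; simpl; ring. Qed.
Lemma Cmod_pos z : 0 <= Cmod z.
Proof. unfold Cmod; apply sqrt_pos. Qed.
Lemma Cmod_sq z : Cmod z ^ 2 = Cnorm2 z.
Proof. rewrite Cmod_Cnorm2. simpl. rewrite Rmult_1_r. apply sqrt_sqrt, Cnorm2_nonneg. Qed.
Lemma Cmod_sq' z : Cmod z * Cmod z = Cnorm2 z.
Proof. rewrite Cmod_Cnorm2. apply sqrt_sqrt, Cnorm2_nonneg. Qed.
Lemma Cnorm2_mul z w : Cnorm2 (Cmul z w) = Cnorm2 z * Cnorm2 w.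
Proof. unfold Cnorm2, Cmul; simpl; ring. Qed.
Lemma Cmod_mul z w : Cmod (Cmul z w) = Cmod z * Cmod w.
Proof. rewrite !Cmod_Cnorm2, Cnorm2_mul. apply sqrt_mult; apply Cnorm2_nonneg. Qed.
Lemma Cmod_le_of_Cnorm2 z r : 0 <= r -> Cnorm2 z <= r * r -> Cmod z <= r.
Proof. intros. rewrite Cmod_Cnorm2, <- (sqrt_square r) by auto. apply sqrt_le_1_alt; auto. Qed.

Lemma Cmod_triangle z w : Cmod (Cadd z w) <= Cmod z + Cmod w.
Proof.
  pose proof (Cmod_pos z); pose proof (Cmod_pos w).
  apply Cmod_le_of_Cnorm2; [lra|].
  pose proof (Cmod_sq' z) as Ez; pose proof (Cmod_sq' w) as Ew.
  unfold Cnorm2, Cadd in *; simpl in *.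
  assert (Hd : fst z * fst w + snd z * snd w <= Cmod z * Cmod w).
  { destruct (Rle_dec (fst z * fst w + snd z * snd w) 0); [nra|].
    apply Rsqr_incr_0_var; unfold Rsqr; [|nra].
    replace (Cmod z * Cmod w * (Cmod z * Cmod w)) with ((Cmod z * Cmod z) * (Cmod w * Cmod w)) by ring.
    rewrite Ez, Ew. pose proof (Rle_0_sqr (fst z * snd w - snd z * fst w)). unfold Rsqr in *. nra. }
  nra.
Qed.

Lemma Cmod_C0 : Cmod C0 = 0.
Proof. rewrite Cmod_Cnorm2; unfold Cnorm2, C0; simpl. replace (0*0+0*0) with 0 by ring. apply sqrt_0. Qed.
Lemma Cmod_fst z : Rabs (fst z) <= Cmod z.
Proof. rewrite Cmod_Cnorm2, <- sqrt_Rsqr_abs. apply sqrt_le_1_alt. unfold Rsqr, Cnorm2; nra. Qed.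
Lemma Cmod_snd z : Rabs (snd z) <= Cmod z.
Proof. rewrite Cmod_Cnorm2, <- sqrt_Rsqr_abs. apply sqrt_le_1_alt. unfold Rsqr, Cnorm2; nra. Qed.
Lemma Cmod_neg1 : Cmod (-1, 0) = 1.
Proof. rewrite Cmod_Cnorm2; unfold Cnorm2; simpl. replace (-1 * -1 + 0 * 0) with 1 by ring. apply sqrt_1. Qed.
Lemma Cmod_RtoC r : Cmod (RtoC r) = Rabs r.
Proof. rewrite Cmod_Cnorm2; unfold Cnorm2, RtoC; simpl. rewrite <- sqrt_Rsqr_abs. f_equal. unfold Rsqr; ring. Qed.

Lemma QC_approx (c : C) d : 0 < d -> exists q, Cmod (Cadd c (Cmul (-1,0) (QtoC q))) < d.
Proof.
  intro Hd. destruct (Q_approx (fst c) (d/2)) as [q1 H1]; [lra|].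
  destruct (Q_approx (snd c) (d/2)) as [q2 H2]; [lra|].
  exists (q1, q2).
  pose proof (Rabs_pos (fst c - Q2R q1)); pose proof (Rabs_pos (snd c - Q2R q2)).
  set (e1 := Rabs (fst c - Q2R q1)) in *. set (e2 := Rabs (snd c - Q2R q2)) in *.
  apply Rle_lt_trans with (e1 + e2); [|lra].
  apply Cmod_le_of_Cnorm2; [lra|].
  unfold Cnorm2, Cadd, Cmul, QtoC; simpl.
  replace (fst c + (-1 * Q2R q1 - 0 * Q2R q2)) with (fst c - Q2R q1) by ring.
  replace (snd c + (-1 * Q2R q2 + 0 * Q2R q1)) with (snd c - Q2R q2) by ring.
  assert (Hsq : forall u, u * u = Rabs u * Rabs u) by (intro u; rewrite <- Rabs_mult, Rabs_right; nra).
  rewrite (Hsq (fst c - Q2R q1)), (Hsq (snd c - Q2R q2)). fold e1 e2. nra.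
Qed.

Lemma Cmod_approx_bound (c w : C) : Cmod (Cadd c (Cmul (-1,0) w)) <= 1 -> Cmod w <= Cmod c + 1.
Proof.
  intro H. replace w with (Cadd c (Cmul (-1,0) (Cadd c (Cmul (-1,0) w))))
    by (apply Cext; unfold Cadd, Cmul; simpl; ring).
  eapply Rle_trans; [apply Cmod_triangle|]. rewrite Cmod_mul, Cmod_neg1. lra.
Qed.

Lemma Csum_fst k f : fst (Csum k f) = Rsum k (fun a => fst (f a)).
Proof. induction k; simpl; auto. rewrite IHk; auto. Qed.
Lemma Csum_snd k f : snd (Csum k f) = Rsum k (fun a => snd (f a)).
Proof. induction k; simpl; auto. rewrite IHk; auto. Qed.
Lemma Csum_ext k f g : (forall a, (a < k)%nat -> f a = g a) -> Csum k f = Csum k g.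
Proof. induction k; simpl; intros; auto. rewrite IHk, H; auto. Qed.
Lemma Csum_Cmod k f : Cmod (Csum k f) <= Rsum k (fun a => Cmod (f a)).
Proof. induction k; simpl. { rewrite Cmod_C0; lra. } eapply Rle_trans; [apply Cmod_triangle|lra]. Qed.
Lemma Csum_delta k b (f : nat -> C) : (b < k)%nat ->
  Csum k (fun c => Cmul (if Nat.eqb b c then C1 else C0) (f c)) = f b.
Proof.
  intro Hb. apply Cext; rewrite ?Csum_fst, ?Csum_snd.
  - rewrite (Rsum_ext _ _ (fun c => if Nat.eqb c b then fst (f b) else 0)); [apply Rsum_delta; auto|].
    intros c _. destruct (Nat.eqb_spec b c), (Nat.eqb_spec c b); subst; try lia; simpl; ring.
  - rewrite (Rsum_ext _ _ (fun c => if Nat.eqb c b then snd (f b) else 0)); [apply Rsum_delta; auto|].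
    intros c _. destruct (Nat.eqb_spec b c), (Nat.eqb_spec c b); subst; try lia; simpl; ring.
Qed.

(* Expand complex matrix/vector expressions into real sums of components. *)
Ltac csimpl := unfold Madj, Mmul, Madd, Mscal, Mvec, Mid in *;
  unfold Cmul, Cadd, Cconj, RtoC, C0, C1 in *; simpl fst in *; simpl snd in *;
  rewrite ?Csum_fst, ?Csum_snd in *.
(* Gather both sides into single sums and compare summands by [ring]. *)
Ltac rin := repeat progress (rewrite ?Rsum_in_scal, ?Rsum_mul_r, ?Rsum_in_plus, ?Rsum_in_minus, ?Rsum_in_opp).
Ltac rsum_close := rin; apply Rsum_ext; intros; simpl; ring.

Definition vnorm2 (k : nat) (v : nat -> C) : R := Rsum k (fun a => Cnorm2 (v a)).
Definition rdot (k : nat) (v w : nat -> C) : R :=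
  Rsum k (fun a => fst (v a) * fst (w a) + snd (v a) * snd (w a)).
Lemma vnorm2_nonneg k v : 0 <= vnorm2 k v.
Proof. apply Rsum_nonneg; intros; apply Cnorm2_nonneg. Qed.
Lemma vnorm_vnorm2 k v : vnorm k v = sqrt (vnorm2 k v).
Proof. unfold vnorm, vnorm2. f_equal. apply Rsum_ext; intros; apply Cmod_sq. Qed.
Lemma vnorm_pos k v : 0 <= vnorm k v.
Proof. unfold vnorm; apply sqrt_pos. Qed.
Lemma vnorm_sq k v : vnorm k v * vnorm k v = vnorm2 k v.
Proof. rewrite vnorm_vnorm2; apply sqrt_sqrt, vnorm2_nonneg. Qed.
Lemma vnorm2_ext k v w : (forall a, (a < k)%nat -> v a = w a) -> vnorm2 k v = vnorm2 k w.
Proof. intro H; unfold vnorm2; apply Rsum_ext; intros; rewrite H; auto. Qed.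
Lemma vnorm_ext k v w : (forall a, (a < k)%nat -> v a = w a) -> vnorm k v = vnorm k w.
Proof. intro H; rewrite !vnorm_vnorm2, (vnorm2_ext k v w); auto. Qed.
Lemma rdot_self k v : rdot k v v = vnorm2 k v.
Proof. unfold rdot, vnorm2; apply Rsum_ext; intros; unfold Cnorm2; ring. Qed.
Lemma rdot_extr k v w w' : (forall a, (a < k)%nat -> w a = w' a) -> rdot k v w = rdot k v w'.
Proof. intro H; unfold rdot; apply Rsum_ext; intros; rewrite H; auto. Qed.

Lemma vnorm2_comb k v w t :
  vnorm2 k (fun a => Cadd (v a) (Cmul (RtoC t) (w a))) = vnorm2 k v + 2 * t * rdot k v w + t * t * vnorm2 k w.
Proof.
  unfold vnorm2, rdot. rewrite <- Rsum_scal, <- Rsum_scal, <- !Rsum_plus.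
  apply Rsum_ext; intros. unfold Cnorm2, Cadd, Cmul, RtoC; simpl. ring.
Qed.

Lemma Cauchy_Schwarz k v w : rdot k v w * rdot k v w <= vnorm2 k v * vnorm2 k w.
Proof.
  apply quadratic_discriminant; try apply vnorm2_nonneg.
  intro t. rewrite <- vnorm2_comb. apply vnorm2_nonneg.
Qed.

Lemma rdot_le k v w : rdot k v w <= vnorm k v * vnorm k w.
Proof.
  pose proof (Cauchy_Schwarz k v w). pose proof (vnorm_sq k v). pose proof (vnorm_sq k w).
  pose proof (vnorm_pos k v). pose proof (vnorm_pos k w).
  destruct (Rle_dec (rdot k v w) 0); [nra|].
  apply Rsqr_incr_0_var; unfold Rsqr; nra.
Qed.

Lemma vnorm_triangle k v w :
  vnorm k (fun a => Cadd (v a) (w a)) <= vnorm k v + vnorm k w.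
Proof.
  pose proof (vnorm2_comb k v w 1) as H.
  rewrite (vnorm2_ext k _ (fun a => Cadd (v a) (w a))) in H
    by (intros; f_equal; apply Cext; unfold Cmul, RtoC; simpl; ring).
  rewrite vnorm_vnorm2, H.
  pose proof (rdot_le k v w). pose proof (vnorm_sq k v). pose proof (vnorm_sq k w).
  pose proof (vnorm_pos k v). pose proof (vnorm_pos k w).
  rewrite <- (sqrt_square (vnorm k v + vnorm k w)) by lra.
  apply sqrt_le_1_alt. nra.
Qed.

Lemma Minkowski_sum n (f g h : nat -> R) :
  (forall i, (i < n)%nat -> 0 <= h i <= f i + g i) -> (forall i, (i < n)%nat -> 0 <= f i /\ 0 <= g i) ->
  sqrt (Rsum n (fun i => h i * h i)) <= sqrt (Rsum n (fun i => f i * f i)) + sqrt (Rsum n (fun i => g i * g i)).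
Proof.
  intros H1 H2. pose proof (vnorm_triangle n (fun i => RtoC (f i)) (fun i => RtoC (g i))) as H.
  rewrite !vnorm_vnorm2 in H. unfold vnorm2 in H.
  eapply Rle_trans; [|eapply Rle_trans; [apply H|]].
  - apply sqrt_le_1_alt. apply Rsum_le; intros i Hi. specialize (H1 i Hi). specialize (H2 i Hi).
    unfold Cnorm2, RtoC, Cadd; simpl. nra.
  - right. f_equal; f_equal; apply Rsum_ext; intros; unfold Cnorm2, RtoC; simpl; ring.
Qed.

Lemma vnorm2_scal k c v : vnorm2 k (fun a => Cmul c (v a)) = Cnorm2 c * vnorm2 k v.
Proof. unfold vnorm2. rewrite <- Rsum_scal. apply Rsum_ext; intros; apply Cnorm2_mul. Qed.
Lemma vnorm_scal k c v : vnorm k (fun a => Cmul c (v a)) = Cmod c * vnorm k v.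
Proof. rewrite !vnorm_vnorm2, vnorm2_scal, Cmod_Cnorm2. apply sqrt_mult; auto using Cnorm2_nonneg, vnorm2_nonneg. Qed.

Lemma vnorm_coord k v a : (a < k)%nat -> Cmod (v a) <= vnorm k v.
Proof.
  intro Ha. rewrite Cmod_Cnorm2, vnorm_vnorm2. apply sqrt_le_1_alt.
  apply (Rsum_term_le k (fun a => Cnorm2 (v a))); auto. intros; apply Cnorm2_nonneg.
Qed.

Lemma vnorm_zero_vec k : vnorm k (fun _ => C0) = 0.
Proof.
  rewrite vnorm_vnorm2; unfold vnorm2. rewrite (Rsum_ext _ _ (fun _ => 0)), Rsum_zero; [apply sqrt_0|].
  intros; unfold Cnorm2, C0; simpl; ring.
Qed.

Lemma vnorm_zero k v : vnorm k v = 0 -> forall a, (a < k)%nat -> v a = C0.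
Proof.
  intros H a Ha. pose proof (vnorm_coord k v a Ha). pose proof (Cmod_pos (v a)).
  assert (Hv : Cmod (v a) = 0) by lra. rewrite Cmod_Cnorm2 in Hv.
  apply sqrt_eq_0 in Hv; [|apply Cnorm2_nonneg]. unfold Cnorm2 in Hv.
  apply Cext; simpl; nra.
Qed.
Lemma vnorm2_zero k v : vnorm2 k v = 0 -> forall a, (a < k)%nat -> v a = C0.
Proof. intros H. apply vnorm_zero. rewrite vnorm_vnorm2, H. apply sqrt_0. Qed.

Definition evec (b : nat) : nat -> C := fun a => if Nat.eqb a b then C1 else C0.
Lemma vnorm_evec k b : (b < k)%nat -> vnorm k (evec b) = 1.
Proof.
  intro Hb. rewrite vnorm_vnorm2. unfold vnorm2.
  rewrite (Rsum_ext _ _ (fun a => if Nat.eqb a b then 1 else 0)), Rsum_delta; auto; [apply sqrt_1|].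
  intros a _. unfold evec. destruct (Nat.eqb a b); unfold Cnorm2; simpl; ring.
Qed.

Lemma Mvec_scalv k A s v a : Mvec k A (fun c => Cmul s (v c)) a = Cmul s (Mvec k A v a).
Proof. apply Cext; csimpl; rsum_close. Qed.
Lemma Mvec_Madd k A B v a : Mvec k (Madd A B) v a = Cadd (Mvec k A v a) (Mvec k B v a).
Proof. apply Cext; csimpl; rsum_close. Qed.
Lemma Mvec_Mscal k s A v a : Mvec k (Mscal s A) v a = Cmul s (Mvec k A v a).
Proof. apply Cext; csimpl; rsum_close. Qed.
Lemma Mvec_Mmul k A B v a : Mvec k (Mmul k A B) v a = Mvec k A (Mvec k B v) a.
Proof.
  apply Cext; csimpl; rin.
  - rewrite (Rsum_ext k _ (fun c => Rsum k (fun d => (fst (A a d) * fst (B d c) - snd (A a d) * snd (B d c)) * fst (v c)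
          - (fst (A a d) * snd (B d c) + snd (A a d) * fst (B d c)) * snd (v c))))
      by (intros; csimpl; rin; apply Rsum_ext; intros; simpl; ring).
    rewrite Rsum_swap. apply Rsum_ext; intros; csimpl; rin; apply Rsum_ext; intros; simpl; ring.
  - rewrite (Rsum_ext k _ (fun c => Rsum k (fun d => (fst (A a d) * fst (B d c) - snd (A a d) * snd (B d c)) * snd (v c)
          + (fst (A a d) * snd (B d c) + snd (A a d) * fst (B d c)) * fst (v c))))
      by (intros; csimpl; rin; apply Rsum_ext; intros; simpl; ring).
    rewrite Rsum_swap. apply Rsum_ext; intros; csimpl; rin; apply Rsum_ext; intros; simpl; ring.
Qed.
Lemma Mvec_Mid k v a : (a < k)%nat -> Mvec k Mid v a = v a.
Proof. intro. unfold Mvec, Mid. apply Csum_delta; auto. Qed.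
Lemma Mvec_extv k A u v a : (forall c, (c < k)%nat -> u c = v c) -> Mvec k A u a = Mvec k A v a.
Proof. intro H. unfold Mvec. apply Csum_ext; intros; rewrite H; auto. Qed.
Lemma Mvec_extA k A B v a : (forall c, (c < k)%nat -> A a c = B a c) -> Mvec k A v a = Mvec k B v a.
Proof. intro H. unfold Mvec. apply Csum_ext; intros; rewrite H; auto. Qed.
Lemma Mvec_evec k A a b : (b < k)%nat -> Mvec k A (evec b) a = A a b.
Proof.
  intros Hb. unfold Mvec, evec. rewrite <- (Csum_delta k b (fun c => A a c)) by auto.
  apply Csum_ext; intros c Hc.
  destruct (Nat.eqb_spec c b), (Nat.eqb_spec b c); subst; try lia; apply Cext; simpl; ring.
Qed.

Lemma rdot_adj k A v w : rdot k (Mvec k A v) w = rdot k v (Mvec k (Madj A) w).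
Proof.
  unfold rdot. csimpl.
  rewrite (Rsum_ext k _ (fun a => Rsum k (fun c =>
     (fst (A a c) * fst (v c) - snd (A a c) * snd (v c)) * fst (w a) +
     (fst (A a c) * snd (v c) + snd (A a c) * fst (v c)) * snd (w a))))
    by (intros; csimpl; rin; apply Rsum_ext; intros; simpl; ring).
  rewrite Rsum_swap. apply Rsum_ext; intros c _. csimpl; rin; apply Rsum_ext; intros; simpl; ring.
Qed.

Lemma Madj_Madj A a b : Madj (Madj A) a b = A a b.
Proof. unfold Madj, Cconj; apply Cext; simpl; ring. Qed.

(** * The operator norm *)

Definition opset k A := fun s => exists v : nat -> C, vnorm k v <= 1 /\ s = Fin (vnorm k (Mvec k A v)).

(* A crude a priori bound on ||A v|| for ||v|| <= 1; it shows that the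
   supremum defining the operator norm is finite. *)
Lemma Mvec_crude_bound k A v : vnorm k v <= 1 ->
  vnorm k (Mvec k A v) <= sqrt (Rsum k (fun a => Rsum k (fun c => Cmod (A a c)) ^ 2)).
Proof.
  intro Hv. rewrite vnorm_vnorm2. apply sqrt_le_1_alt. unfold vnorm2. apply Rsum_le; intros a Ha.
  rewrite <- Cmod_sq. unfold Mvec.
  assert (H1 : Cmod (Csum k (fun c => Cmul (A a c) (v c))) <= Rsum k (fun c => Cmod (A a c))).
  { eapply Rle_trans; [apply Csum_Cmod|]. apply Rsum_le; intros c Hc. rewrite Cmod_mul.
    pose proof (vnorm_coord k v c Hc). pose proof (Cmod_pos (A a c)). pose proof (Cmod_pos (v c)). nra. }
  pose proof (Cmod_pos (Csum k (fun c => Cmul (A a c) (v c)))). simpl. nra.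
Qed.

Lemma opnorm_spec k A :
  (forall v, vnorm k v <= 1 -> vnorm k (Mvec k A v) <= opnorm k A) /\
  (forall c, (forall v, vnorm k v <= 1 -> vnorm k (Mvec k A v) <= c) -> opnorm k A <= c).
Proof.
  unfold opnorm. fold (opset k A). pose proof (Rbar_sup_spec (opset k A)) as [H1 H2].
  set (bd := sqrt (Rsum k (fun a => Rsum k (fun c => Cmod (A a c)) ^ 2))).
  assert (Hin : opset k A (Fin (vnorm k (Mvec k A (fun _ => C0))))).
  { exists (fun _ => C0). rewrite vnorm_zero_vec. split; auto; lra. }
  assert (Hub : Rbar_le (Rbar_sup (opset k A)) (Fin bd)).
  { apply H2. intros x [v [Hv ->]]. simpl. apply Mvec_crude_bound; auto. }
  pose proof (H1 _ Hin) as Hlow.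
  destruct (Rbar_sup (opset k A)) as [r| |]; simpl in *; try tauto.
  split.
  - intros v Hv. apply (H1 (Fin _)). exists v; auto.
  - intros c Hc. apply (H2 (Fin c)). intros x [v [Hv ->]]; simpl; apply Hc; auto.
Qed.

Lemma op_bound1 k A v : vnorm k v <= 1 -> vnorm k (Mvec k A v) <= opnorm k A.
Proof. apply opnorm_spec. Qed.
Lemma op_least k A c : (forall v, vnorm k v <= 1 -> vnorm k (Mvec k A v) <= c) -> opnorm k A <= c.
Proof. apply opnorm_spec. Qed.
Lemma op_nonneg k A : 0 <= opnorm k A.
Proof.
  eapply Rle_trans; [apply vnorm_pos|]. apply (op_bound1 k A (fun _ => C0)).
  rewrite vnorm_zero_vec; lra.
Qed.

(* ||A v|| <= ||A|| ||v|| for every v, by rescaling v to the unit sphere. *)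
Lemma op_bound k A v : vnorm k (Mvec k A v) <= opnorm k A * vnorm k v.
Proof.
  destruct (Req_dec (vnorm k v) 0) as [H0|H0].
  - rewrite H0, Rmult_0_r, (vnorm_ext k _ (fun _ => C0)), vnorm_zero_vec; [lra|].
    intros a Ha. rewrite (Mvec_extv k A v (fun c => Cmul C0 (v c))), Mvec_scalv.
    + apply Cext; simpl; ring.
    + intros c Hc. rewrite (vnorm_zero k v H0 c Hc). apply Cext; simpl; ring.
  - pose proof (vnorm_pos k v). set (t := / vnorm k v).
    assert (Ht : 0 < t) by (apply Rinv_0_lt_compat; lra).
    assert (H1 : vnorm k (Mvec k A (fun c => Cmul (RtoC t) (v c))) <= opnorm k A).
    { apply op_bound1. rewrite vnorm_scal, Cmod_RtoC, Rabs_right by lra. unfold t; rewrite Rinv_l; lra. }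
    rewrite (vnorm_ext k _ (fun a => Cmul (RtoC t) (Mvec k A v a))) in H1 by (intros; apply Mvec_scalv).
    rewrite vnorm_scal, Cmod_RtoC, Rabs_right in H1 by lra. unfold t in H1.
    apply Rmult_le_compat_r with (r := vnorm k v) in H1; [|lra].
    replace (/ vnorm k v * vnorm k (Mvec k A v) * vnorm k v) with (vnorm k (Mvec k A v)) in H1 by (field; lra).
    lra.
Qed.

Lemma op_ext k A B : (forall a b, (a < k)%nat -> (b < k)%nat -> A a b = B a b) -> opnorm k A = opnorm k B.
Proof.
  intro H. apply Rle_antisym; apply op_least; intros v Hv.
  - rewrite (vnorm_ext k _ (Mvec k B v)); [apply op_bound1; auto|]. intros; apply Mvec_extA; auto.
  - rewrite (vnorm_ext k _ (Mvec k A v)); [apply op_bound1; auto|]. intros; symmetry; apply Mvec_extA; auto.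
Qed.

Lemma op_entry k A a b : (a < k)%nat -> (b < k)%nat -> Cmod (A a b) <= opnorm k A.
Proof.
  intros Ha Hb. eapply Rle_trans; [|apply (op_bound1 k A (evec b))].
  - rewrite <- (Mvec_evec k A a b Hb). apply vnorm_coord; auto.
  - rewrite vnorm_evec; auto; lra.
Qed.

Lemma op_add k A B : opnorm k (Madd A B) <= opnorm k A + opnorm k B.
Proof.
  apply op_least; intros v Hv.
  rewrite (vnorm_ext k _ (fun a => Cadd (Mvec k A v a) (Mvec k B v a))) by (intros; apply Mvec_Madd).
  eapply Rle_trans; [apply vnorm_triangle|].
  pose proof (op_bound1 k A v Hv). pose proof (op_bound1 k B v Hv). lra.
Qed.
Lemma op_scal k s A : opnorm k (Mscal s A) <= Cmod s * opnorm k A.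
Proof.
  apply op_least; intros v Hv.
  rewrite (vnorm_ext k _ (fun a => Cmul s (Mvec k A v a))) by (intros; apply Mvec_Mscal).
  rewrite vnorm_scal. apply Rmult_le_compat_l; [apply Cmod_pos|apply op_bound1; auto].
Qed.
Lemma op_mul k A B : opnorm k (Mmul k A B) <= opnorm k A * opnorm k B.
Proof.
  apply op_least; intros v Hv.
  rewrite (vnorm_ext k _ (Mvec k A (Mvec k B v))) by (intros; apply Mvec_Mmul).
  eapply Rle_trans; [apply op_bound|]. apply Rmult_le_compat_l; [apply op_nonneg|apply op_bound1; auto].
Qed.
Lemma op_id k : opnorm k Mid <= 1.
Proof. apply op_least; intros v Hv. rewrite (vnorm_ext k _ v); auto. intros; apply Mvec_Mid; auto. Qed.
Lemma op_cid k c : opnorm k (Mscal c Mid) <= Cmod c.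
Proof. eapply Rle_trans; [apply op_scal|]. pose proof (op_id k). pose proof (Cmod_pos c). nra. Qed.

Definition Msub (A B : Mat) : Mat := Madd A (Mscal (-1, 0) B).

(* ||A*|| <= ||A||, via ||A* w||^2 = <w, A A* w>. *)
Lemma op_adj k A : opnorm k (Madj A) <= opnorm k A.
Proof.
  apply op_least; intros w Hw. set (u := Mvec k (Madj A) w).
  assert (E : vnorm2 k u = rdot k w (Mvec k A u)).
  { rewrite <- rdot_self. unfold u. rewrite rdot_adj. unfold rdot.
    apply Rsum_ext; intros; f_equal; f_equal; f_equal; apply Mvec_extA; intros; apply Madj_Madj. }
  pose proof (rdot_le k w (Mvec k A u)). pose proof (op_bound k A u).
  pose proof (vnorm_sq k u). pose proof (vnorm_pos k u). pose proof (vnorm_pos k w).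
  pose proof (op_nonneg k A). pose proof (vnorm_pos k (Mvec k A u)).
  assert (vnorm k u * vnorm k u <= vnorm k u * opnorm k A).
  { assert (vnorm k w * vnorm k (Mvec k A u) <= 1 * (opnorm k A * vnorm k u))
      by (apply Rmult_le_compat; auto; lra).
    nra. }
  destruct (Req_dec (vnorm k u) 0); [lra|].
  apply Rmult_le_reg_l with (vnorm k u); [lra|nra].
Qed.

(* Matrices are functions nat -> nat -> C of which only the k x k block is
   relevant; [meq k] is equality on that block, and all matrix operations
   respect it. *)
Definition meq k (A B : Mat) := forall a b, (a < k)%nat -> (b < k)%nat -> A a b = B a b.
Lemma meq_refl k A : meq k A A.
Proof. intros a b _ _; auto. Qed.
Lemma meq_sym k A B : meq k A B -> meq k B A.
Proof. intros H a b Ha Hb; symmetry; auto. Qed.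
Lemma meq_trans k A B D : meq k A B -> meq k B D -> meq k A D.
Proof. intros H1 H2 a b Ha Hb; rewrite H1, H2; auto. Qed.
Lemma meq_pt k A B : (forall a b, A a b = B a b) -> meq k A B.
Proof. intros H a b _ _; auto. Qed.
Ltac mstep X := apply (meq_trans _ _ X).
Ltac mrefl := apply meq_refl.

Lemma Mmul_compat k A A' B B' : meq k A A' -> meq k B B' -> meq k (Mmul k A B) (Mmul k A' B').
Proof. intros H1 H2 a b Ha Hb. unfold Mmul. apply Csum_ext; intros c Hc. rewrite H1, H2; auto. Qed.
Lemma Madd_compat k A A' B B' : meq k A A' -> meq k B B' -> meq k (Madd A B) (Madd A' B').
Proof. intros H1 H2 a b Ha Hb. unfold Madd. rewrite H1, H2; auto. Qed.
Lemma Mscal_compat k s A A' : meq k A A' -> meq k (Mscal s A) (Mscal s A').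
Proof. intros H1 a b Ha Hb. unfold Mscal. rewrite H1; auto. Qed.
Lemma Madj_compat k A A' : meq k A A' -> meq k (Madj A) (Madj A').
Proof. intros H1 a b Ha Hb. unfold Madj. rewrite H1; auto. Qed.
Lemma Msub_compat k A A' B B' : meq k A A' -> meq k B B' -> meq k (Msub A B) (Msub A' B').
Proof. intros; unfold Msub; apply Madd_compat; auto; apply Mscal_compat; auto. Qed.

Lemma Mmul_assoc k A B D a b : Mmul k (Mmul k A B) D a b = Mmul k A (Mmul k B D) a b.
Proof.
  change (Mmul k A (Mmul k B D) a b) with (Mvec k A (Mvec k B (fun c => D c b)) a).
  rewrite <- Mvec_Mmul. reflexivity.
Qed.
Lemma Mmul_assoc_m k A B D : meq k (Mmul k (Mmul k A B) D) (Mmul k A (Mmul k B D)).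
Proof. apply meq_pt; intros; apply Mmul_assoc. Qed.
Lemma Madj_Mmul k A B a b : Madj (Mmul k A B) a b = Mmul k (Madj B) (Madj A) a b.
Proof. apply Cext; csimpl; rsum_close. Qed.
Lemma Madj_Mmul_m k A B : meq k (Madj (Mmul k A B)) (Mmul k (Madj B) (Madj A)).
Proof. apply meq_pt; intros; apply Madj_Mmul. Qed.
Lemma Mmul_Madd_l k A B D a b : Mmul k (Madd A B) D a b = Madd (Mmul k A D) (Mmul k B D) a b.
Proof. apply Cext; csimpl; rsum_close. Qed.
Lemma Mmul_Madd_r k A B D a b : Mmul k D (Madd A B) a b = Madd (Mmul k D A) (Mmul k D B) a b.
Proof. apply Cext; csimpl; rsum_close. Qed.
Lemma Mmul_Mscal_l k s A B a b : Mmul k (Mscal s A) B a b = Mscal s (Mmul k A B) a b.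
Proof. apply Cext; csimpl; rsum_close. Qed.
Lemma Mmul_Mscal_r k s A B a b : Mmul k A (Mscal s B) a b = Mscal s (Mmul k A B) a b.
Proof. apply Cext; csimpl; rsum_close. Qed.
Lemma Mmul_Msub_r k A B D a b : Mmul k A (Msub B D) a b = Msub (Mmul k A B) (Mmul k A D) a b.
Proof. unfold Msub. apply Cext; csimpl; rsum_close. Qed.
Lemma Mmul_Msub_l k A B D a b : Mmul k (Msub B D) A a b = Msub (Mmul k B A) (Mmul k D A) a b.
Proof. unfold Msub. apply Cext; csimpl; rsum_close. Qed.
Lemma Mmul_Mid_l k A : meq k (Mmul k Mid A) A.
Proof.
  intros a b Ha Hb. change (Mmul k Mid A a b) with (Mvec k Mid (fun c => A c b) a). rewrite Mvec_Mid; auto.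
Qed.
Lemma Mmul_Mid_r k A : meq k (Mmul k A Mid) A.
Proof.
  intros a b Ha Hb. unfold Mmul. rewrite <- (Mvec_evec k A a b Hb). unfold Mvec, evec, Mid.
  apply Csum_ext; intros c Hc. destruct (Nat.eqb_spec c b); auto.
Qed.

(** * The normalized Hilbert-Schmidt norm *)

(* hs2 k X = tau_k(X* X) and hs k X = ||X||_2 for a single matrix. *)
Definition hs2 (k : nat) (X : Mat) : R := / INR k * Rsum k (fun a => Rsum k (fun b => Cnorm2 (X a b))).
Definition hs (k : nat) (X : Mat) : R := sqrt (hs2 k X).

Lemma invk_nonneg k : 0 <= / INR k.
Proof. destruct k. { simpl. rewrite Rinv_0; lra. } left; apply Rinv_0_lt_compat, lt_0_INR; lia. Qed.
Lemma hs2_nonneg k X : 0 <= hs2 k X.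
Proof.
  unfold hs2. apply Rmult_le_pos; [apply invk_nonneg|].
  apply Rsum_nonneg; intros; apply Rsum_nonneg; intros; apply Cnorm2_nonneg.
Qed.
Lemma hs_pos k X : 0 <= hs k X.
Proof. apply sqrt_pos. Qed.
Lemma hs_sq k X : hs k X * hs k X = hs2 k X.
Proof. apply sqrt_sqrt, hs2_nonneg. Qed.
Lemma hs2_ext k X Y : meq k X Y -> hs2 k X = hs2 k Y.
Proof. intro H. unfold hs2. f_equal. apply Rsum_ext; intros; apply Rsum_ext; intros; rewrite H; auto. Qed.
Lemma hs_ext k X Y : meq k X Y -> hs k X = hs k Y.
Proof. intro H; unfold hs; rewrite (hs2_ext k X Y); auto. Qed.
Lemma hs_meq_le k X Y : meq k X Y -> hs k X <= hs k Y.
Proof. intro H; rewrite (hs_ext k X Y H); lra. Qed.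

Lemma norm2_hs k n T : norm2 k n T = sqrt (Rsum n (fun i => hs2 k (T i))).
Proof.
  unfold norm2. f_equal. apply Rsum_ext; intros i _. unfold hs2, tau, Mtrace, Cre. unfold Cmul at 1.
  unfold RtoC; simpl fst; simpl snd. rewrite Csum_fst, Rmult_0_l, Rminus_0_r. f_equal.
  rewrite Rsum_swap. apply Rsum_ext; intros b _. unfold Mmul. rewrite Csum_fst. apply Rsum_ext; intros.
  unfold Madj, Cconj, Cmul, Cnorm2; simpl; ring.
Qed.

Lemma hs2_cols k X :
  Rsum k (fun a => Rsum k (fun b => Cnorm2 (X a b))) = Rsum k (fun b => vnorm2 k (fun a => X a b)).
Proof. rewrite Rsum_swap. auto. Qed.
Lemma hs_cols k X :
  hs k X = sqrt (/ INR k) * sqrt (Rsum k (fun b => vnorm k (fun a => X a b) * vnorm k (fun a => X a b))).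
Proof.
  unfold hs, hs2. rewrite hs2_cols, sqrt_mult;
    [|apply invk_nonneg|apply Rsum_nonneg; intros; apply vnorm2_nonneg].
  f_equal. f_equal. apply Rsum_ext; intros; rewrite vnorm_sq; auto.
Qed.

(* hs is a norm: triangle inequality (Minkowski over the columns),
   homogeneity, symmetry of distances, and definiteness. *)
Lemma hs_triangle k X Y : hs k (Madd X Y) <= hs k X + hs k Y.
Proof.
  rewrite !hs_cols, <- Rmult_plus_distr_l. apply Rmult_le_compat_l; [apply sqrt_pos|].
  apply Minkowski_sum; intros b Hb.
  - split; [apply vnorm_pos|apply (vnorm_triangle k (fun a => X a b) (fun a => Y a b))].
  - split; apply vnorm_pos.
Qed.
Lemma hs2_scal k c X : hs2 k (Mscal c X) = Cnorm2 c * hs2 k X.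
Proof.
  unfold hs2.
  replace (Rsum k (fun a => Rsum k (fun b => Cnorm2 (Mscal c X a b))))
    with (Cnorm2 c * Rsum k (fun a => Rsum k (fun b => Cnorm2 (X a b)))); [ring|].
  rewrite <- Rsum_scal. apply Rsum_ext; intros. rewrite <- Rsum_scal.
  apply Rsum_ext; intros. unfold Mscal; symmetry; apply Cnorm2_mul.
Qed.
Lemma hs_sub_tri k A B D : hs k (Msub A D) <= hs k (Msub A B) + hs k (Msub B D).
Proof.
  rewrite (hs_ext k (Msub A D) (Madd (Msub A B) (Msub B D))); [apply hs_triangle|].
  intros a b _ _; unfold Msub, Madd, Mscal; apply Cext; simpl; ring.
Qed.
Lemma hs_sub_sym k A B : hs k (Msub A B) = hs k (Msub B A).
Proof.
  unfold hs. f_equal. rewrite (hs2_ext k (Msub A B) (Mscal (-1,0) (Msub B A))).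
  - rewrite hs2_scal. unfold Cnorm2; simpl; ring.
  - intros a b _ _; unfold Msub, Madd, Mscal; apply Cext; simpl; ring.
Qed.
Lemma hs_zero k X : meq k X (fun _ _ => C0) -> hs k X = 0.
Proof.
  intro H. rewrite (hs_ext k X _ H). unfold hs, hs2.
  rewrite (Rsum_ext k _ (fun _ => 0)), Rsum_zero, Rmult_0_r; [apply sqrt_0|].
  intros; rewrite (Rsum_ext k _ (fun _ => 0)); [apply Rsum_zero|]. intros; unfold Cnorm2, C0; simpl; ring.
Qed.

(* ||A X||_2 <= ||A|| ||X||_2, column by column. *)
Lemma hs2_mul_l k A X : hs2 k (Mmul k A X) <= opnorm k A * opnorm k A * hs2 k X.
Proof.
  unfold hs2. rewrite !hs2_cols.
  replace (opnorm k A * opnorm k A * (/ INR k * Rsum k (fun b => vnorm2 k (fun a => X a b))))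
    with (/ INR k * (opnorm k A * opnorm k A * Rsum k (fun b => vnorm2 k (fun a => X a b)))) by ring.
  apply Rmult_le_compat_l; [apply invk_nonneg|]. rewrite <- Rsum_scal. apply Rsum_le; intros b Hb.
  change (fun a => Mmul k A X a b) with (Mvec k A (fun c => X c b)).
  rewrite <- vnorm_sq, <- vnorm_sq. pose proof (op_bound k A (fun c => X c b)).
  pose proof (vnorm_pos k (Mvec k A (fun c => X c b))). nra.
Qed.
Lemma hs2_adj k X : hs2 k (Madj X) = hs2 k X.
Proof.
  unfold hs2. f_equal. rewrite Rsum_swap. apply Rsum_ext; intros; apply Rsum_ext; intros.
  unfold Madj, Cconj, Cnorm2; simpl; ring.
Qed.
(* ||X A||_2 <= ||X||_2 ||A||, by taking adjoints. *)
Lemma hs2_mul_r k X A : hs2 k (Mmul k X A) <= hs2 k X * (opnorm k A * opnorm k A).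
Proof.
  rewrite <- hs2_adj, (hs2_ext k _ (Mmul k (Madj A) (Madj X))) by apply Madj_Mmul_m.
  eapply Rle_trans; [apply hs2_mul_l|]. rewrite hs2_adj.
  pose proof (op_adj k A). pose proof (op_nonneg k (Madj A)). pose proof (hs2_nonneg k X).
  rewrite Rmult_comm. apply Rmult_le_compat_l; auto. nra.
Qed.
Lemma hs_mul_l k A X : hs k (Mmul k A X) <= opnorm k A * hs k X.
Proof. apply sqrt_mul_le; [apply hs2_nonneg|apply hs2_mul_l|apply op_nonneg]. Qed.
Lemma hs_mul_r k X A : hs k (Mmul k X A) <= opnorm k A * hs k X.
Proof. apply sqrt_mul_le; [apply hs2_nonneg|rewrite Rmult_comm; apply hs2_mul_r|apply op_nonneg]. Qed.

(* ||X||_2 <= ||X||: each column has norm at most ||X||. *)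
Lemma hs_le_op k X : hs k X <= opnorm k X.
Proof.
  rewrite hs_cols. pose proof (op_nonneg k X).
  apply Rle_trans with (sqrt (/ INR k) * sqrt (INR k * (opnorm k X * opnorm k X))).
  - apply Rmult_le_compat_l; [apply sqrt_pos|]. apply sqrt_le_1_alt.
    rewrite <- Rsum_const. apply Rsum_le; intros b Hb.
    rewrite (vnorm_ext _ _ (Mvec k X (evec b))) by (intros; rewrite Mvec_evec; auto).
    pose proof (op_bound1 k X (evec b)) as H1. rewrite vnorm_evec in H1 by auto.
    specialize (H1 ltac:(lra)). pose proof (vnorm_pos k (Mvec k X (evec b))). nra.
  - rewrite <- sqrt_mult, <- Rmult_assoc by (try apply invk_nonneg; pose proof (pos_INR k); nra).
    destruct k.
    + simpl. rewrite Rinv_0, !Rmult_0_l, sqrt_0. lra.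
    + rewrite Rinv_l, Rmult_1_l, sqrt_square by (auto; apply not_0_INR; lia). lra.
Qed.

(** * Unitaries and unitary conjugation *)

Lemma unit_iso k W v : unitary k W -> vnorm2 k (Mvec k W v) = vnorm2 k v.
Proof.
  intro HW. rewrite <- !rdot_self, rdot_adj.
  apply rdot_extr. intros a Ha. rewrite <- Mvec_Mmul, (Mvec_extA k _ Mid); [apply Mvec_Mid; auto|].
  intros c Hc. apply HW; auto.
Qed.
Lemma op_unit k W : unitary k W -> opnorm k W <= 1.
Proof. intro HW. apply op_least; intros v Hv. rewrite vnorm_vnorm2, unit_iso, <- vnorm_vnorm2; auto. Qed.
Lemma op_unit_adj k W : unitary k W -> opnorm k (Madj W) <= 1.
Proof. intro HW. eapply Rle_trans; [apply op_adj|apply op_unit; auto]. Qed.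
Lemma unitary_meq k W : unitary k W -> meq k (Mmul k (Madj W) W) Mid.
Proof. intros H a b Ha Hb; apply H; auto. Qed.

Lemma unit_defect_row k W b : unitary k W -> (b < k)%nat ->
  vnorm2 k (fun a => Cadd (Mvec k W (Mvec k (Madj W) (evec b)) a) (Cmul (RtoC (-1)) (evec b a)))
  = 1 - Rsum k (fun a => Cnorm2 (W b a)).
Proof.
  intros HW Hb. rewrite vnorm2_comb, unit_iso, rdot_adj, rdot_self by auto.
  rewrite <- (vnorm_sq k (evec b)), vnorm_evec by auto.
  unfold vnorm2. rewrite (Rsum_ext k (fun a => Cnorm2 (Mvec k (Madj W) (evec b) a)) (fun a => Cnorm2 (W b a))); [ring|].
  intros a Ha. rewrite Mvec_evec by auto. unfold Madj, Cconj, Cnorm2; simpl; ring.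
Qed.

(* The squared entries of a unitary sum to k (its columns are unit vectors). *)
Lemma unit_entries_sum k W : unitary k W -> Rsum k (fun b => Rsum k (fun a => Cnorm2 (W b a))) = INR k.
Proof.
  intro HW. rewrite Rsum_swap, <- (Rmult_1_r (INR k)), <- Rsum_const. apply Rsum_ext; intros a Ha.
  transitivity (vnorm2 k (evec a)); [|rewrite <- vnorm_sq, vnorm_evec; auto; ring].
  rewrite <- (unit_iso k W (evec a)) by auto. unfold vnorm2; apply Rsum_ext; intros; rewrite Mvec_evec; auto.
Qed.

(* In finite dimension a left inverse is a right inverse: W W* = 1, since the
   nonnegative defects of the previous lemma sum to k - k = 0. *)
Lemma unit_right k W : unitary k W -> meq k (Mmul k W (Madj W)) Mid.
Proof.
  intro HW.
  set (g := fun b => vnorm2 k (fun a => Cadd (Mvec k W (Mvec k (Madj W) (evec b)) a) (Cmul (RtoC (-1)) (evec b a)))).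
  assert (Hsum : Rsum k g = 0).
  { rewrite (Rsum_ext k g (fun b => 1 - Rsum k (fun a => Cnorm2 (W b a)))) by (intros; apply unit_defect_row; auto).
    rewrite <- Rsum_in_minus, unit_entries_sum, Rsum_const by auto. ring. }
  intros a b Ha Hb.
  assert (Hgb : g b = 0).
  { pose proof (Rsum_term_le k g b (fun b _ => vnorm2_nonneg k _) Hb). pose proof (vnorm2_nonneg k (fun a => Cadd (Mvec k W (Mvec k (Madj W) (evec b)) a) (Cmul (RtoC (-1)) (evec b a)))).
    fold (g b) in H0. lra. }
  pose proof (vnorm2_zero k _ Hgb a Ha) as H. cbv beta in H.
  change (Mmul k W (Madj W) a b) with (Mvec k W (fun c => Madj W c b) a).
  rewrite (Mvec_extv k W _ (Mvec k (Madj W) (evec b))) by (intros; rewrite Mvec_evec; auto).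
  change (Mid a b) with (evec b a).
  pose proof (f_equal fst H) as H1. pose proof (f_equal snd H) as H2.
  unfold Cadd, Cmul, RtoC, C0 in H1, H2; simpl in H1, H2. apply Cext; lra.
Qed.

Lemma unitary_adj k V : unitary k V -> unitary k (Madj V).
Proof.
  intros HV a b Ha Hb. rewrite <- (unit_right k V HV a b Ha Hb). unfold Mmul.
  apply Csum_ext; intros. rewrite Madj_Madj; auto.
Qed.

Lemma unitary_prod k W V : unitary k W -> unitary k V -> unitary k (Mmul k W (Madj V)).
Proof.
  intros HW HV. mstep (Mmul k (Mmul k V (Madj W)) (Mmul k W (Madj V))).
  { apply Mmul_compat; [|mrefl]. mstep (Mmul k (Madj (Madj V)) (Madj W)); [apply Madj_Mmul_m|].
    apply Mmul_compat; [|mrefl]. apply meq_pt; intros; apply Madj_Madj. }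
  mstep (Mmul k V (Mmul k (Mmul k (Madj W) W) (Madj V))).
  { apply meq_pt; intros. rewrite Mmul_assoc. apply Csum_ext; intros. f_equal. rewrite Mmul_assoc. auto. }
  mstep (Mmul k V (Mmul k Mid (Madj V))).
  { apply Mmul_compat; [mrefl|]. apply Mmul_compat; [apply unitary_meq; auto|mrefl]. }
  mstep (Mmul k V (Madj V)); [apply Mmul_compat; [mrefl|apply Mmul_Mid_l]|].
  apply unit_right; auto.
Qed.

Lemma unitary_Mid k : unitary k Mid.
Proof.
  intros a b Ha Hb. transitivity (Mmul k Mid Mid a b); [|apply Mmul_Mid_l; auto].
  unfold Mmul. apply Csum_ext; intros c Hc. f_equal. unfold Madj, Mid.
  destruct (Nat.eqb_spec c a), (Nat.eqb_spec a c); subst; try lia; apply Cext; simpl; ring.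
Qed.

Definition conj k (W X : Mat) : Mat := Mmul k (Mmul k W X) (Madj W).

Lemma hs_conj k W X : unitary k W -> hs k (conj k W X) <= hs k X.
Proof.
  intro HW. unfold conj. eapply Rle_trans; [apply hs_mul_r|].
  pose proof (op_unit_adj k W HW). pose proof (op_nonneg k (Madj W)).
  pose proof (hs_mul_l k W X). pose proof (op_unit k W HW). pose proof (hs_pos k X).
  pose proof (hs_pos k (Mmul k W X)). pose proof (op_nonneg k W). nra.
Qed.
Lemma op_conj k W X : unitary k W -> opnorm k (conj k W X) <= opnorm k X.
Proof.
  intro HW. unfold conj. eapply Rle_trans; [apply op_mul|].
  pose proof (op_unit_adj k W HW). pose proof (op_nonneg k (Madj W)).
  pose proof (op_mul k W X). pose proof (op_unit k W HW). pose proof (op_nonneg k X).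
  pose proof (op_nonneg k (Mmul k W X)). pose proof (op_nonneg k W). nra.
Qed.

Lemma conj_mul k W X Y : unitary k W -> meq k (conj k W (Mmul k X Y)) (Mmul k (conj k W X) (conj k W Y)).
Proof.
  intro HW. unfold conj. apply meq_sym.
  mstep (Mmul k (Mmul k W X) (Mmul k (Madj W) (Mmul k (Mmul k W Y) (Madj W)))); [apply Mmul_assoc_m|].
  mstep (Mmul k (Mmul k W X) (Mmul k (Mmul k (Madj W) (Mmul k W Y)) (Madj W))).
  { apply Mmul_compat; [mrefl|apply meq_sym, Mmul_assoc_m]. }
  mstep (Mmul k (Mmul k W X) (Mmul k (Mmul k (Mmul k (Madj W) W) Y) (Madj W))).
  { apply Mmul_compat; [mrefl|]. apply Mmul_compat; [apply meq_sym, Mmul_assoc_m|mrefl]. }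
  mstep (Mmul k (Mmul k W X) (Mmul k (Mmul k Mid Y) (Madj W))).
  { apply Mmul_compat; [mrefl|]. apply Mmul_compat; [|mrefl]. apply Mmul_compat; [apply unitary_meq; auto|mrefl]. }
  mstep (Mmul k (Mmul k W X) (Mmul k Y (Madj W))).
  { apply Mmul_compat; [mrefl|]. apply Mmul_compat; [apply Mmul_Mid_l|mrefl]. }
  mstep (Mmul k (Mmul k (Mmul k W X) Y) (Madj W)); [apply meq_sym, Mmul_assoc_m|].
  apply Mmul_compat; [apply Mmul_assoc_m|mrefl].
Qed.
Lemma conj_add k W X Y : meq k (conj k W (Madd X Y)) (Madd (conj k W X) (conj k W Y)).
Proof.
  unfold conj. mstep (Mmul k (Madd (Mmul k W X) (Mmul k W Y)) (Madj W)).
  - apply Mmul_compat; [|mrefl]. apply meq_pt; intros; apply Mmul_Madd_r.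
  - apply meq_pt; intros; apply Mmul_Madd_l.
Qed.
Lemma conj_scal k W c X : meq k (conj k W (Mscal c X)) (Mscal c (conj k W X)).
Proof.
  unfold conj. mstep (Mmul k (Mscal c (Mmul k W X)) (Madj W)).
  - apply Mmul_compat; [|mrefl]. apply meq_pt; intros; apply Mmul_Mscal_r.
  - apply meq_pt; intros; apply Mmul_Mscal_l.
Qed.
Lemma conj_sub k W X Y : meq k (conj k W (Msub X Y)) (Msub (conj k W X) (conj k W Y)).
Proof. unfold Msub. eapply meq_trans; [apply conj_add|]. apply Madd_compat; [mrefl|apply conj_scal]. Qed.
Lemma conj_id k W : unitary k W -> meq k (conj k W Mid) Mid.
Proof.
  intro HW. unfold conj. mstep (Mmul k W (Madj W)); [|apply unit_right; auto].
  apply Mmul_compat; [apply Mmul_Mid_r|mrefl].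
Qed.
Lemma conj_comp k W V X : meq k (conj k W (conj k V X)) (conj k (Mmul k W V) X).
Proof.
  unfold conj.
  mstep (Mmul k (Mmul k (Mmul k W (Mmul k V X)) (Madj V)) (Madj W)).
  { apply Mmul_compat; [apply meq_sym, Mmul_assoc_m|mrefl]. }
  mstep (Mmul k (Mmul k W (Mmul k V X)) (Mmul k (Madj V) (Madj W))); [apply Mmul_assoc_m|].
  apply Mmul_compat; [apply meq_sym, Mmul_assoc_m|apply meq_sym, Madj_Mmul_m].
Qed.
Lemma conj_compatW k W W' X : meq k W W' -> meq k (conj k W X) (conj k W' X).
Proof. intro H. unfold conj. apply Mmul_compat; [apply Mmul_compat; auto; mrefl|apply Madj_compat; auto]. Qed.
Lemma conj_Mid k X : meq k (conj k Mid X) X.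
Proof.
  unfold conj. mstep (Mmul k X (Madj Mid)); [apply Mmul_compat; [apply Mmul_Mid_l|mrefl]|].
  mstep (Mmul k X Mid); [|apply Mmul_Mid_r].
  apply Mmul_compat; [mrefl|]. apply meq_pt; intros; unfold Madj, Mid.
  destruct (Nat.eqb_spec b a), (Nat.eqb_spec a b); subst; try lia; apply Cext; simpl; ring.
Qed.

Lemma norm2_pos k n T : 0 <= norm2 k n T.
Proof. rewrite norm2_hs; apply sqrt_pos. Qed.

Lemma norm2_tri k n X Y Z : (forall i, (i < n)%nat -> hs k (Z i) <= hs k (X i) + hs k (Y i)) ->
  norm2 k n Z <= norm2 k n X + norm2 k n Y.
Proof.
  intro H. rewrite !norm2_hs.
  rewrite (Rsum_ext n (fun i => hs2 k (Z i)) (fun i => hs k (Z i) * hs k (Z i))) by (intros; symmetry; apply hs_sq).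
  rewrite (Rsum_ext n (fun i => hs2 k (X i)) (fun i => hs k (X i) * hs k (X i))) by (intros; symmetry; apply hs_sq).
  rewrite (Rsum_ext n (fun i => hs2 k (Y i)) (fun i => hs k (Y i) * hs k (Y i))) by (intros; symmetry; apply hs_sq).
  apply Minkowski_sum; intros; split; auto using hs_pos.
Qed.
Lemma norm2_le_sum k n T : norm2 k n T <= Rsum n (fun i => hs k (T i)).
Proof. rewrite norm2_hs. apply sqrt_Rsum_le. intros; apply hs2_nonneg. Qed.
Lemma hs_le_norm2 k n T i : (i < n)%nat -> hs k (T i) <= norm2 k n T.
Proof.
  intro Hi. rewrite norm2_hs. apply sqrt_le_1_alt.
  apply (Rsum_term_le n (fun i => hs2 k (T i))); auto. intros; apply hs2_nonneg.
Qed.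

Lemma hs_conj_swap k W X Y : unitary k W ->
  hs k (Msub (conj k (Madj W) Y) X) <= hs k (Msub Y (conj k W X)).
Proof.
  intro HW. assert (HW' : unitary k (Madj W)) by (apply unitary_adj; auto).
  eapply Rle_trans; [|apply (hs_conj k (Madj W) _ HW')].
  apply hs_meq_le. mstep (Msub (conj k (Madj W) Y) (conj k (Madj W) (conj k W X))).
  - apply Msub_compat; [mrefl|]. mstep (conj k Mid X); [apply meq_sym, conj_Mid|].
    mstep (conj k (Mmul k (Madj W) W) X); [|apply meq_sym, conj_comp].
    apply conj_compatW, meq_sym, unitary_meq; auto.
  - apply meq_sym, conj_sub.
Qed.

Lemma orbit_tri k n r1 r2 B A A' :
  orbit_ball k n r1 B A -> orbit_ball k n r2 B A' -> orbit_ball k n (r1 + r2) A' A.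
Proof.
  intros [W [HW H1]] [V [HV H2]].
  exists (Mmul k W (Madj V)). split; [apply unitary_prod; auto|].
  eapply Rle_lt_trans; [|apply Rplus_lt_compat; [apply H1|apply H2]].
  apply norm2_tri. intros i Hi. unfold Tsub.
  fold (conj k W (B i)) (conj k V (B i)) (conj k (Mmul k W (Madj V)) (A' i)).
  fold (Msub (A i) (conj k W (B i))) (Msub (A' i) (conj k V (B i))) (Msub (A i) (conj k (Mmul k W (Madj V)) (A' i))).
  eapply Rle_trans; [apply (hs_sub_tri k _ (conj k W (B i)))|]. apply Rplus_le_compat_l.
  eapply Rle_trans; [apply hs_meq_le; apply Msub_compat; [mrefl|apply meq_sym, conj_comp]|].
  eapply Rle_trans; [apply hs_meq_le, meq_sym, conj_sub|].
  eapply Rle_trans; [apply hs_conj; auto|].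
  rewrite hs_sub_sym. apply hs_conj_swap; auto.
Qed.

(** * Covering numbers *)

Lemma nat_min_ex (P : nat -> Prop) N : P N -> exists m, P m /\ forall M, P M -> (m <= M)%nat.
Proof.
  revert P. induction N as [N IH] using lt_wf_ind. intros P HN.
  destruct (classic (exists M, (M < N)%nat /\ P M)) as [[M [HM PM]]|HnM].
  - apply (IH M HM P PM).
  - exists N; split; auto. intros M PM. destruct (Nat.lt_ge_cases M N); auto. exfalso; apply HnM; eauto.
Qed.

Lemma o2_spec k n S om N : covers k n S om N -> covers k n S om (o2 k n S om) /\ (o2 k n S om <= N)%nat.
Proof.
  intro H. destruct (nat_min_ex _ N H) as [m Hm].
  assert (Hs : covers k n S om (o2 k n S om) /\ forall M, covers k n S om M -> (o2 k n S om <= M)%nat).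
  { unfold o2. apply (epsilon_spec (inhabits 0%nat) (fun N => covers k n S om N /\ forall M, covers k n S om M -> (N <= M)%nat)).
    exists m; auto. }
  destruct Hs as [Hs1 Hs2]; split; auto.
Qed.

(* Covering from an index list: if every point of S is "near" some index
   c in L0, and points near the same index lie in each other's om-orbit ball,
   then S is covered by at most |L0| om-orbit balls centred in S (pick one
   point of S near each index that has one). *)
Lemma build_cover {T : Type} k n (S : MTuple -> Prop) om (L0 : list T) (near : T -> MTuple -> Prop) :
  (forall c A A', near c A -> near c A' -> orbit_ball k n om A' A) ->
  exists L, (length L <= length L0)%nat /\ (forall B, In B L -> S B) /\
    (forall A, S A -> (exists c, In c L0 /\ near c A) -> exists B, In B L /\ orbit_ball k n om B A).
Proof.
  intro Htri. induction L0 as [|c rest IH].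
  - exists nil; simpl; repeat split; auto. { intros; tauto. } intros A _ [c [[] _]].
  - destruct IH as [L' [Hl [HS HC]]].
    destruct (classic (exists A0, S A0 /\ near c A0)) as [[A0 [HA0 Hn0]]|Hno].
    + exists (A0 :: L'); simpl; repeat split; try lia.
      * intros B [<-|HB]; auto.
      * intros A HA [c' [[Ec|Hc'] Hn]].
        -- subst c'. exists A0; split; auto. apply (Htri c); auto.
        -- destruct (HC A HA (ex_intro _ c' (Logic.conj Hc' Hn))) as [B [HB1 HB2]]; eauto.
    + exists L'; simpl; repeat split; auto; try lia.
      intros A HA [c' [[Ec|Hc'] Hn]].
      * subst c'. exfalso; apply Hno; eauto.
      * apply HC; eauto.
Qed.

Lemma build_cover_o2 {T : Type} k n (S : MTuple -> Prop) om (L0 : list T) (near : T -> MTuple -> Prop) :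
  (forall c A A', near c A -> near c A' -> orbit_ball k n om A' A) ->
  (forall A, S A -> exists c, In c L0 /\ near c A) ->
  exists N, covers k n S om N /\ (N <= length L0)%nat.
Proof.
  intros H1 H2. destruct (build_cover k n S om L0 near H1) as [L [Hl [HS HC]]].
  exists (length L); split; auto. exists L; repeat split; auto.
Qed.

Lemma real_grid_aux R0 h : 0 < h -> forall N x, -R0 <= x <= -R0 + INR N * h ->
  exists j, (j <= N)%nat /\ Rabs (x - (-R0 + INR j * h)) <= h.
Proof.
  intros Hh N. induction N; intros x Hx.
  - exists 0%nat; split; auto. simpl in *. rewrite Rabs_right; lra.
  - destruct (Rle_dec x (-R0 + INR N * h)).
    + destruct (IHN x ltac:(lra)) as [j [Hj Hj2]]. exists j; split; auto.
    + exists (S N); split; auto. rewrite S_INR in *. rewrite Rabs_left1; lra.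
Qed.
Lemma real_grid R0 h : 0 <= R0 -> 0 < h ->
  exists RG : list R, forall x, Rabs x <= R0 -> exists g, In g RG /\ Rabs (x - g) <= h.
Proof.
  intros HR Hh. destruct (INR_unbounded (2 * R0 / h)) as [N HN].
  exists (map (fun j => -R0 + INR j * h) (seq 0 (S N))). intros x Hx.
  apply Rabs_le_inv in Hx.
  assert (2 * R0 <= INR N * h).
  { apply Rmult_lt_compat_r with (r := h) in HN; auto. unfold Rdiv in HN. rewrite Rmult_assoc, Rinv_l in HN; lra. }
  destruct (real_grid_aux R0 h Hh N x ltac:(lra)) as [j [Hj Hj2]].
  exists (-R0 + INR j * h); split; auto. apply in_map_iff. exists j; split; auto. apply in_seq; lia.
Qed.
Lemma complex_grid R0 h : 0 <= R0 -> 0 < h -> exists G : list C, forall z, Cmod z <= R0 ->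
  exists g, In g G /\ Rabs (fst z - fst g) <= h /\ Rabs (snd z - snd g) <= h.
Proof.
  intros HR Hh. destruct (real_grid R0 h HR Hh) as [RG HRG]. exists (list_prod RG RG).
  intros z Hz. destruct (HRG (fst z)) as [g1 [Hg1 Hg1']]; [pose proof (Cmod_fst z); lra|].
  destruct (HRG (snd z)) as [g2 [Hg2 Hg2']]; [pose proof (Cmod_snd z); lra|].
  exists (g1, g2); simpl; split; auto. apply in_prod; auto.
Qed.

(* All functions from a finite list l of indices into a finite list G of
   values (outside l they are constant). *)
Fixpoint funs {I T : Type} (dec : forall x y : I, {x = y} + {x <> y}) (d : T) (G : list T) (l : list I)
  : list (I -> T) :=
  match l with
  | nil => (fun _ => d) :: nil
  | x :: l' => flat_map (fun g => map (fun f => fun y => if dec y x then g else f y) (funs dec d G l')) G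
  end.

Lemma funs_spec {I T : Type} dec (d : T) G (P : I -> T -> Prop) l :
  (forall x, In x l -> exists g, In g G /\ P x g) ->
  exists f, In f (funs dec d G l) /\ forall x, In x l -> P x (f x).
Proof.
  induction l as [|x l IH]; intros H.
  - exists (fun _ => d); simpl; split; auto. intros x [].
  - destruct (H x (or_introl eq_refl)) as [g [Hg Pg]].
    destruct IH as [f [Hf Pf]]. { intros; apply H; simpl; auto. }
    exists (fun y => if dec y x then g else f y). split.
    + simpl. apply in_flat_map. exists g; split; auto. apply in_map_iff. exists f; split; auto.
    + intros y Hy. destruct (dec y x) as [->|Hne]; auto.
      destruct Hy as [Ey|Hy]; [congruence|auto].
Qed.

Definition idx3 := (nat * nat * nat)%type.
Definition idx3_eq_dec : forall x y : idx3, {x = y} + {x <> y}.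
Proof. repeat decide equality. Defined.
Definition allidx (n k : nat) : list idx3 :=
  flat_map (fun i => flat_map (fun a => map (fun b => (i, a, b)) (seq 0 k)) (seq 0 k)) (seq 0 n).
Lemma allidx_spec n k i a b :
  In (i, a, b) (allidx n k) <-> (i < n)%nat /\ (a < k)%nat /\ (b < k)%nat.
Proof.
  unfold allidx. rewrite in_flat_map. split.
  - intros [i' [Hi' Hx]]. apply in_flat_map in Hx as [a' [Ha' Hx]].
    apply in_map_iff in Hx as [b' [Hx Hb']]. injection Hx; intros; subst.
    apply in_seq in Hi', Ha', Hb'. lia.
  - intros (Hi & Ha & Hb). exists i; split; [apply in_seq; lia|].
    apply in_flat_map. exists a; split; [apply in_seq; lia|]. apply in_map. apply in_seq; lia.
Qed.

Lemma hs2_entry_bound k X c : 0 <= c ->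
  (forall a b, (a < k)%nat -> (b < k)%nat -> Cnorm2 (X a b) <= c) -> hs2 k X <= INR k * c.
Proof.
  intros Hc H. unfold hs2.
  assert (Hs : Rsum k (fun a => Rsum k (fun b => Cnorm2 (X a b))) <= INR k * (INR k * c)).
  { rewrite <- Rsum_const. apply Rsum_le; intros. rewrite <- Rsum_const. apply Rsum_le; intros. auto. }
  destruct k; [simpl; rewrite Rinv_0; lra|].
  assert (0 < INR (S k)) by (apply lt_0_INR; lia).
  apply Rmult_le_compat_l with (r := / INR (S k)) in Hs; [|left; apply Rinv_0_lt_compat; auto].
  replace (/ INR (S k) * (INR (S k) * (INR (S k) * c))) with (INR (S k) * c) in Hs by (field; lra). auto.
Qed.
Lemma norm2_entry_bound k n T c : 0 <= c ->
  (forall i a b, (i < n)%nat -> (a < k)%nat -> (b < k)%nat -> Cnorm2 (T i a b) <= c) ->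
  norm2 k n T <= sqrt (INR n * (INR k * c)).
Proof.
  intros Hc H. rewrite norm2_hs. apply sqrt_le_1_alt. rewrite <- Rsum_const.
  apply Rsum_le; intros i Hi. apply hs2_entry_bound; auto.
Qed.

(* Choice of the mesh: for h = om / (4 (nk + 1)), n-tuples whose entries are
   h-close (in each coordinate) to the same grid point have squared entry
   differences <= 8 h^2, hence ||.||_2-distance <= sqrt (n k 8 h^2) < om. *)
Lemma grid_mesh_small n k om : 0 < om ->
  sqrt (INR n * (INR k * (8 * (om / (4 * (INR n * INR k + 1))) * (om / (4 * (INR n * INR k + 1)))))) < om.
Proof.
  intro Hom. pose proof (pos_INR n); pose proof (pos_INR k).
  set (q := INR n * INR k). assert (Hq : 0 <= q) by (unfold q; nra).
  replace (INR n * (INR k * (8 * (om / (4 * (q + 1))) * (om / (4 * (q + 1))))))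
    with (om * om * (q / (2 * (q + 1) * (q + 1)))) by (unfold q in *; field; lra).
  assert (Hlt : q / (2 * (q + 1) * (q + 1)) < 1).
  { unfold Rdiv. apply Rmult_lt_reg_r with (2 * (q + 1) * (q + 1)); [nra|].
    rewrite Rmult_assoc, Rinv_l by nra. nra. }
  assert (0 <= q / (2 * (q + 1) * (q + 1))) by (apply Rmult_le_pos; auto; left; apply Rinv_0_lt_compat; nra).
  assert (0 < om * om) by nra.
  apply Rlt_le_trans with (sqrt (om * om)); [|rewrite sqrt_square; lra].
  apply sqrt_lt_1_alt. split.
  - apply Rmult_le_pos; lra.
  - rewrite <- (Rmult_1_r (om * om)) at 2. apply Rmult_lt_compat_l; lra.
Qed.

Lemma finite_cover k n (S : MTuple -> Prop) R0 om : 0 <= R0 -> 0 < om ->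
  (forall A, S A -> forall i a b, (i < n)%nat -> (a < k)%nat -> (b < k)%nat -> Cmod (A i a b) <= R0) ->
  exists N, covers k n S om N.
Proof.
  intros HR Hom HS.
  set (h := om / (4 * (INR n * INR k + 1))).
  assert (Hh : 0 < h) by (unfold h; pose proof (pos_INR n); pose proof (pos_INR k);
    apply Rdiv_lt_0_compat; nra).
  destruct (complex_grid R0 h HR Hh) as [G HG].
  set (near := fun (f : idx3 -> C) (A : MTuple) => forall i a b, (i < n)%nat -> (a < k)%nat -> (b < k)%nat ->
     Rabs (fst (A i a b) - fst (f (i,a,b))) <= h /\ Rabs (snd (A i a b) - snd (f (i,a,b))) <= h).
  destruct (build_cover_o2 k n S om (funs idx3_eq_dec C0 G (allidx n k)) near) as [N [HN _]].
  - intros f A A' H1 H2. exists Mid; split; [apply unitary_Mid|].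
    eapply Rle_lt_trans; [|apply (grid_mesh_small n k om Hom)]. fold h.
    apply norm2_entry_bound; [nra|]. intros i a b Hi Ha Hb. unfold Tsub, Madd, Mscal.
    change (Mmul k (Mmul k Mid (A' i)) (Madj Mid) a b) with (conj k Mid (A' i) a b).
    rewrite (conj_Mid k (A' i) a b Ha Hb).
    destruct (H1 i a b Hi Ha Hb) as [Ha1 Ha2]. destruct (H2 i a b Hi Ha Hb) as [Hb1 Hb2].
    apply Rabs_le_inv in Ha1, Ha2, Hb1, Hb2. unfold Cnorm2, Cmul, Cadd; simpl. nra.
  - intros A HA.
    destruct (funs_spec idx3_eq_dec C0 G (fun x g => match x with (i,a,b) =>
        Rabs (fst (A i a b) - fst g) <= h /\ Rabs (snd (A i a b) - snd g) <= h end) (allidx n k)) as [f [Hf Pf]].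
    + intros [[i a] b] Hx. apply allidx_spec in Hx as (Hi & Ha & Hb). apply HG, HS; auto.
    + exists f; split; auto. intros i a b Hi Ha Hb. apply (Pf (i,a,b)). apply allidx_spec; auto.
  - exists N; auto.
Qed.

(** * Noncommutative polynomials evaluated on matrices *)

(* Given a bound M on the generators, [pbound P M] bounds the operator norm
   of P and [plip P M] is a Lipschitz constant of P for ||.||_2. *)
Fixpoint pbound (P : ncpoly) (M : R) : R :=
  match P with
  | PVar _ => M
  | PConst c => Cmod (QtoC c)
  | PAdd P1 P2 => pbound P1 M + pbound P2 M
  | PMul P1 P2 => pbound P1 M * pbound P2 M
  end.
Fixpoint plip (P : ncpoly) (M : R) : R :=
  match P with
  | PVar _ => 1
  | PConst _ => 0
  | PAdd P1 P2 => plip P1 M + plip P2 M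
  | PMul P1 P2 => pbound P1 M * plip P2 M + plip P1 M * pbound P2 M
  end.
Lemma pbound_pos P M : 0 <= M -> 0 <= pbound P M.
Proof. intro HM; induction P; simpl; auto using Cmod_pos; nra. Qed.
Lemma plip_pos P M : 0 <= M -> 0 <= plip P M.
Proof. intro HM; induction P; simpl; try lra. pose proof (pbound_pos P1 M HM); pose proof (pbound_pos P2 M HM). nra. Qed.

Lemma evalM_op k n P A M : wf n P -> 0 <= M -> (forall i, (i < n)%nat -> opnorm k (A i) <= M) ->
  opnorm k (evalM k A P) <= pbound P M.
Proof.
  intros Hw HM H; induction P as [i|c|P1 IH1 P2 IH2|P1 IH1 P2 IH2]; simpl in *.
  - auto.
  - apply op_cid.
  - destruct Hw. eapply Rle_trans; [apply op_add|]. specialize (IH1 H0); specialize (IH2 H1); lra.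
  - destruct Hw. eapply Rle_trans; [apply op_mul|]. apply Rmult_le_compat; auto using op_nonneg.
Qed.

Lemma hs_mul_diff k X X' Y Y' :
  hs k (Msub (Mmul k X Y) (Mmul k X' Y')) <= opnorm k X * hs k (Msub Y Y') + opnorm k Y' * hs k (Msub X X').
Proof.
  rewrite (hs_ext k _ (Madd (Mmul k X (Msub Y Y')) (Mmul k (Msub X X') Y'))).
  - eapply Rle_trans; [apply hs_triangle|]. apply Rplus_le_compat; [apply hs_mul_l|apply hs_mul_r].
  - intros a b _ _. unfold Madd. rewrite Mmul_Msub_r, Mmul_Msub_l.
    unfold Msub, Madd, Mscal. apply Cext; simpl; ring.
Qed.

Lemma evalM_lip k n P X Y M : wf n P -> 0 <= M ->
  (forall i, (i < n)%nat -> opnorm k (X i) <= M /\ opnorm k (Y i) <= M) ->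
  hs k (Msub (evalM k X P) (evalM k Y P)) <= plip P M * norm2 k n (Tsub X Y).
Proof.
  intros Hw HM H. pose proof (norm2_pos k n (Tsub X Y)) as Hn2.
  induction P as [i|c|P1 IH1 P2 IH2|P1 IH1 P2 IH2]; simpl in *.
  - rewrite Rmult_1_l. apply (hs_le_norm2 k n (Tsub X Y) i); auto.
  - rewrite hs_zero; [lra|]. intros a b _ _. unfold Msub, Madd, Mscal; apply Cext; simpl; ring.
  - destruct Hw as [W1 W2]. specialize (IH1 W1); specialize (IH2 W2).
    rewrite (hs_ext k _ (Madd (Msub (evalM k X P1) (evalM k Y P1)) (Msub (evalM k X P2) (evalM k Y P2))))
      by (intros a b _ _; unfold Msub, Madd, Mscal; apply Cext; simpl; ring).
    eapply Rle_trans; [apply hs_triangle|lra].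
  - destruct Hw as [W1 W2]. specialize (IH1 W1); specialize (IH2 W2).
    assert (B1 : opnorm k (evalM k X P1) <= pbound P1 M) by (apply (evalM_op k n); auto; intros; apply H; auto).
    assert (B2 : opnorm k (evalM k Y P2) <= pbound P2 M) by (apply (evalM_op k n); auto; intros; apply H; auto).
    eapply Rle_trans; [apply hs_mul_diff|].
    pose proof (hs_pos k (Msub (evalM k X P2) (evalM k Y P2))).
    pose proof (hs_pos k (Msub (evalM k X P1) (evalM k Y P1))).
    pose proof (op_nonneg k (evalM k X P1)). pose proof (op_nonneg k (evalM k Y P2)).
    assert (opnorm k (evalM k X P1) * hs k (Msub (evalM k X P2) (evalM k Y P2))
            <= pbound P1 M * (plip P2 M * norm2 k n (Tsub X Y))) by (apply Rmult_le_compat; auto).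
    assert (opnorm k (evalM k Y P2) * hs k (Msub (evalM k X P1) (evalM k Y P1))
            <= pbound P2 M * (plip P1 M * norm2 k n (Tsub X Y))) by (apply Rmult_le_compat; auto).
    nra.
Qed.

Lemma evalM_conj k n P W X : unitary k W -> wf n P ->
  meq k (evalM k (fun i => conj k W (X i)) P) (conj k W (evalM k X P)).
Proof.
  intros HW Hw. induction P as [i|c|P1 IH1 P2 IH2|P1 IH1 P2 IH2]; simpl in *.
  - mrefl.
  - apply meq_sym. mstep (Mscal (QtoC c) (conj k W Mid)); [apply conj_scal|].
    apply Mscal_compat, conj_id; auto.
  - destruct Hw. mstep (Madd (conj k W (evalM k X P1)) (conj k W (evalM k X P2))).
    + apply Madd_compat; auto.
    + apply meq_sym, conj_add.
  - destruct Hw. mstep (Mmul k (conj k W (evalM k X P1)) (conj k W (evalM k X P2))).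
    + apply Mmul_compat; auto.
    + apply meq_sym, conj_mul; auto.
Qed.

Fixpoint pstar (P : ncpoly) : ncpoly :=
  match P with
  | PVar i => PVar i
  | PConst c => PConst (fst c, Qopp (snd c))
  | PAdd P1 P2 => PAdd (pstar P1) (pstar P2)
  | PMul P1 P2 => PMul (pstar P2) (pstar P1)
  end.
Lemma pstar_wf n P : wf n P -> wf n (pstar P).
Proof. induction P; simpl; tauto. Qed.
Lemma QtoC_conj c : QtoC (fst c, Qopp (snd c)) = Cconj (QtoC c).
Proof. unfold QtoC, Cconj; simpl. rewrite Q2R_opp; auto. Qed.

Lemma evalM_star k n P A : wf n P -> (forall i, (i < n)%nat -> selfadj k (A i)) ->
  meq k (evalM k A (pstar P)) (Madj (evalM k A P)).
Proof.
  intros Hw H. induction P as [i|c|P1 IH1 P2 IH2|P1 IH1 P2 IH2]; simpl in *.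
  - intros a b Ha Hb. apply H; auto.
  - intros a b Ha Hb. rewrite QtoC_conj. unfold Mscal, Madj, Mid, Cconj, Cmul.
    destruct (Nat.eqb_spec a b), (Nat.eqb_spec b a); subst; try lia; apply Cext; simpl; ring.
  - destruct Hw. intros a b Ha Hb. unfold Madd. rewrite IH1, IH2 by auto.
    unfold Madj, Cconj; apply Cext; simpl; ring.
  - destruct Hw. mstep (Mmul k (Madj (evalM k A P2)) (Madj (evalM k A P1))).
    + apply Mmul_compat; auto.
    + apply meq_sym, Madj_Mmul_m.
Qed.

Definition symp (P : ncpoly) : ncpoly := PMul (PConst ((1#2)%Q, 0%Q)) (PAdd P (pstar P)).
Lemma symp_wf n P : wf n P -> wf n (symp P).
Proof. intro; simpl; repeat split; auto using pstar_wf. Qed.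
Lemma QtoC_half : QtoC ((1#2)%Q, 0%Q) = (/2, 0).
Proof. unfold QtoC, Q2R; simpl. apply Cext; simpl; field. Qed.

Lemma symp_sa k n A P : wf n P -> (forall i, (i < n)%nat -> selfadj k (A i)) ->
  selfadj k (evalM k A (symp P)).
Proof.
  intros Hw HA a b Ha Hb. simpl. rewrite QtoC_half, !(Mmul_Mscal_l k _ Mid). unfold Mscal.
  rewrite !(Mmul_Mid_l k _ a b Ha Hb), !(Mmul_Mid_l k _ b a Hb Ha).
  unfold Madd. rewrite !(evalM_star k n P A Hw HA) by auto.
  unfold Madj, Cconj, Cmul, Cadd. apply Cext; simpl; ring.
Qed.

Fixpoint psubst (S : nat -> ncpoly) (P : ncpoly) : ncpoly :=
  match P with
  | PVar i => S i
  | PConst c => PConst c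
  | PAdd P1 P2 => PAdd (psubst S P1) (psubst S P2)
  | PMul P1 P2 => PMul (psubst S P1) (psubst S P2)
  end.
Lemma psubst_wf n m S P : wf n P -> (forall i, (i < n)%nat -> wf m (S i)) -> wf m (psubst S P).
Proof. intros Hw H; induction P; simpl in *; try tauto; auto. Qed.
Lemma evalM_subst k S P A : meq k (evalM k A (psubst S P)) (evalM k (fun i => evalM k A (S i)) P).
Proof.
  induction P; simpl.
  - mrefl.
  - mrefl.
  - apply Madd_compat; auto.
  - apply Mmul_compat; auto.
Qed.

(** * Elementary estimates in a unital C*-algebra *)

Section CStarBasics.
Variable Alg : CStarAlgebra.
Implicit Types x y z a b c d : Alg.

Lemma add_zero_r x : add x zero = x.
Proof. rewrite add_comm; apply add_zero. Qed.
Lemma add_opp_r x : add x (opp x) = zero.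
Proof. rewrite add_comm; apply add_opp. Qed.
Lemma add_cancel_self x : add x x = x -> x = zero.
Proof.
  intro H. transitivity (add (opp x) (add x x)); [rewrite add_assoc, add_opp, add_zero; auto|].
  rewrite H; apply add_opp.
Qed.
Lemma scal_C0 x : scal C0 x = zero.
Proof. apply add_cancel_self. rewrite <- scal_addl. f_equal. apply Cext; unfold C0, Cadd; simpl; ring. Qed.
Lemma opp_unique x y : add y x = zero -> y = opp x.
Proof. intro H. rewrite <- (add_zero_r y), <- (add_opp_r x), add_assoc, H, add_zero. auto. Qed.
Lemma opp_scal x : opp x = scal (-1, 0) x.
Proof.
  symmetry. apply opp_unique. rewrite <- (scal_one Alg x) at 2. rewrite <- scal_addl, <- (scal_C0 x).
  f_equal. apply Cext; unfold C0, C1, Cadd; simpl; ring.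
Qed.
Lemma opp_opp x : opp (opp x) = x.
Proof.
  rewrite !opp_scal, scal_mul. rewrite <- (scal_one Alg x) at 2.
  f_equal. apply Cext; unfold Cmul, C1; simpl; ring.
Qed.
Lemma opp_add x y : opp (add x y) = add (opp x) (opp y).
Proof. rewrite !opp_scal, scal_addr; auto. Qed.
Lemma scal_opp s x : scal s (opp x) = opp (scal s x).
Proof. rewrite !opp_scal, !scal_mul. f_equal. apply Cext; unfold Cmul; simpl; ring. Qed.
Lemma star_opp x : star (opp x) = opp (star x).
Proof. rewrite !opp_scal, star_scal. f_equal. apply Cext; unfold Cconj; simpl; ring. Qed.
Lemma mul_opp_r x y : mul x (opp y) = opp (mul x y).
Proof. rewrite !opp_scal, mul_scalr; auto. Qed.
Lemma mul_opp_l x y : mul (opp x) y = opp (mul x y).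
Proof. rewrite !opp_scal, mul_scall; auto. Qed.
Lemma star_one : star (one : Alg) = one.
Proof. pose proof (star_mul Alg (star one) one) as H. rewrite mul_oner, star_star, mul_oner in H. auto. Qed.
Lemma sub_chain x y z : add (add x (opp y)) (add y (opp z)) = add x (opp z).
Proof. rewrite <- add_assoc. f_equal. rewrite add_assoc, add_opp, add_zero; auto. Qed.
Lemma sub_add x y : add (add x (opp y)) y = x.
Proof. rewrite <- add_assoc, add_opp, add_zero_r; auto. Qed.

(* Norm facts: nonnegativity, and ||x*|| = ||x|| from the C*-identity. *)
Lemma norm_zero : norm (zero : Alg) = 0.
Proof. rewrite <- (scal_C0 zero), norm_scal, Cmod_C0; ring. Qed.
Lemma norm_opp x : norm (opp x) = norm x.
Proof. rewrite opp_scal, norm_scal, Cmod_neg1; ring. Qed.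
Lemma norm_nonneg x : 0 <= norm x.
Proof. pose proof (norm_triangle Alg x (opp x)) as H. rewrite add_opp_r, norm_zero, norm_opp in H. lra. Qed.
Lemma norm_star x : norm (star x) = norm x.
Proof.
  assert (G : forall z : Alg, norm z <= norm (star z)).
  { intro z. pose proof (norm_cstar Alg z). pose proof (norm_mul Alg (star z) z).
    pose proof (norm_nonneg z). pose proof (norm_nonneg (star z)).
    destruct (Req_dec (norm z) 0); [lra|].
    apply Rmult_le_reg_r with (norm z); lra. }
  apply Rle_antisym; [rewrite <- (star_star Alg x) at 2|]; apply G.
Qed.

Lemma cdist_self x : cdist x x = 0.
Proof. unfold cdist; rewrite add_opp_r; apply norm_zero. Qed.
Lemma cdist_nonneg x y : 0 <= cdist x y.
Proof. apply norm_nonneg. Qed.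
Lemma cdist_tri x y z : cdist x z <= cdist x y + cdist y z.
Proof. unfold cdist. rewrite <- (sub_chain x y z). apply norm_triangle. Qed.
Lemma cdist_sym x y : cdist x y = cdist y x.
Proof. unfold cdist. rewrite <- norm_opp, opp_add, opp_opp, add_comm. auto. Qed.
Lemma norm_rev x y : Rabs (norm x - norm y) <= cdist x y.
Proof.
  assert (H1 : norm x <= cdist x y + norm y) by (unfold cdist; rewrite <- (sub_add x y) at 1; apply norm_triangle).
  assert (H2 : norm y <= cdist y x + norm x) by (unfold cdist; rewrite <- (sub_add y x) at 1; apply norm_triangle).
  rewrite cdist_sym in H2. apply Rabs_le; lra.
Qed.
Lemma cdist_add a b c d : cdist (add a b) (add c d) <= cdist a c + cdist b d.
Proof.
  unfold cdist. rewrite opp_add.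
  replace (add (add a b) (add (opp c) (opp d))) with (add (add a (opp c)) (add b (opp d))).
  - apply norm_triangle.
  - rewrite <- !add_assoc. f_equal. rewrite !add_assoc. f_equal. apply add_comm.
Qed.
Lemma cdist_mul a b c d : cdist (mul a b) (mul c d) <= norm a * cdist b d + cdist a c * norm d.
Proof.
  eapply Rle_trans; [apply (cdist_tri _ (mul a d))|]. unfold cdist.
  rewrite <- (mul_opp_r a d), <- mul_addr, <- (mul_opp_l c d), <- mul_addl.
  apply Rplus_le_compat; apply norm_mul.
Qed.
Lemma cdist_scal (s w : C) a b :
  cdist (scal s a) (scal w b) <= Cmod (Cadd s (Cmul (-1,0) w)) * norm a + Cmod w * cdist a b.
Proof.
  eapply Rle_trans; [apply (cdist_tri _ (scal w a))|]. unfold cdist. apply Rplus_le_compat.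
  - rewrite opp_scal, scal_mul, <- scal_addl, norm_scal. lra.
  - rewrite <- scal_opp, <- scal_addr, norm_scal. lra.
Qed.
Lemma cdist_star a b : cdist (star a) (star b) = cdist a b.
Proof. unfold cdist. rewrite <- star_opp, <- star_add, norm_star; auto. Qed.

Lemma cdist_mul_lt a a' b b' eta : 0 < eta ->
  cdist a a' < eta / (2 * (norm b + 2)) -> cdist b b' < Rmin 1 (eta / (2 * (norm a + 1))) ->
  cdist (mul a b) (mul a' b') < eta.
Proof.
  intros He Ha Hb. pose proof (norm_nonneg a). pose proof (norm_nonneg b).
  pose proof (Rmin_l 1 (eta / (2 * (norm a + 1)))). pose proof (Rmin_r 1 (eta / (2 * (norm a + 1)))).
  pose proof (norm_rev b b') as Hb'. apply Rabs_le_inv in Hb'.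
  pose proof (cdist_nonneg a a'). pose proof (cdist_nonneg b b').
  eapply Rle_lt_trans; [apply cdist_mul|].
  assert (norm a * cdist b b' <= eta / 2).
  { apply Rle_trans with ((norm a + 1) * (eta / (2 * (norm a + 1)))); [apply Rmult_le_compat; lra|].
    right; field; lra. }
  assert (cdist a a' * norm b' < eta / 2).
  { apply Rle_lt_trans with (cdist a a' * (norm b + 2)); [apply Rmult_le_compat_l; lra|].
    apply Rlt_le_trans with ((eta / (2 * (norm b + 2))) * (norm b + 2)); [apply Rmult_lt_compat_r; lra|].
    right; field; lra. }
  lra.
Qed.
Lemma cdist_scal_lt (s w : C) a b eta : 0 < eta ->
  Cmod (Cadd s (Cmul (-1, 0) w)) < Rmin 1 (eta / (2 * (norm a + 1))) -> cdist a b < eta / (2 * (Cmod s + 2)) ->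
  cdist (scal s a) (scal w b) < eta.
Proof.
  intros He Hsw Hab. pose proof (norm_nonneg a). pose proof (Cmod_pos s). pose proof (Cmod_pos w).
  pose proof (cdist_nonneg a b).
  pose proof (Rmin_l 1 (eta / (2 * (norm a + 1)))). pose proof (Rmin_r 1 (eta / (2 * (norm a + 1)))).
  assert (Hw : Cmod w <= Cmod s + 1) by (apply Cmod_approx_bound; lra).
  eapply Rle_lt_trans; [apply cdist_scal|].
  assert (Cmod (Cadd s (Cmul (-1, 0) w)) * norm a <= eta / 2).
  { apply Rle_trans with (eta / (2 * (norm a + 1)) * (norm a + 1)).
    - apply Rmult_le_compat; try lra. apply Cmod_pos.
    - right; field; lra. }
  assert (Cmod w * cdist a b < eta / 2).
  { apply Rle_lt_trans with ((Cmod s + 2) * cdist a b); [apply Rmult_le_compat_r; lra|].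
    apply Rlt_le_trans with ((Cmod s + 2) * (eta / (2 * (Cmod s + 2)))); [apply Rmult_lt_compat_l; lra|].
    right; field; lra. }
  lra.
Qed.
End CStarBasics.

(** * Polynomial density in a generated C*-algebra *)

Section Density.
Variable Alg : CStarAlgebra.

Lemma evalA_star n (y : nat -> Alg) P : (forall i, (i < n)%nat -> star (y i) = y i) -> wf n P ->
  star (evalA y P) = evalA y (pstar P).
Proof.
  intros Hy Hw. induction P as [i|c|P1 IH1 P2 IH2|P1 IH1 P2 IH2]; simpl in *.
  - apply Hy; auto.
  - rewrite star_scal, star_one, QtoC_conj. auto.
  - destruct Hw. rewrite star_add, IH1, IH2; auto.
  - destruct Hw. rewrite star_mul, IH1, IH2; auto.
Qed.
Lemma evalA_subst (z : nat -> Alg) S P : evalA z (psubst S P) = evalA (fun i => evalA z (S i)) P.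
Proof. induction P; simpl; auto; rewrite IHP1, IHP2; auto. Qed.

Definition papprox p (y : nat -> Alg) (a : Alg) : Prop :=
  forall eps, 0 < eps -> exists P, wf p P /\ cdist a (evalA y P) < eps.

Variable p : nat.
Variable y : nat -> Alg.

(* The closure properties making [papprox p y] a unital C*-subalgebra. *)
Lemma papprox_one : papprox p y one.
Proof.
  intros eps He. exists (PConst (1%Q, 0%Q)); split; simpl; auto.
  replace (QtoC (1%Q, 0%Q)) with C1 by (unfold QtoC, C1, Q2R; simpl; apply Cext; simpl; field).
  rewrite scal_one, cdist_self; auto.
Qed.
Lemma papprox_add a b : papprox p y a -> papprox p y b -> papprox p y (add a b).
Proof.
  intros Ha Hb eps He. destruct (Ha (eps/2)) as [P [HP1 HP2]]; [lra|].
  destruct (Hb (eps/2)) as [Q [HQ1 HQ2]]; [lra|].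
  exists (PAdd P Q); split; simpl; auto. eapply Rle_lt_trans; [apply cdist_add|lra].
Qed.
(* Complex scalars are approximated by rational ones. *)
Lemma papprox_scal c a : papprox p y a -> papprox p y (scal c a).
Proof.
  intros Ha eps He. pose proof (norm_nonneg Alg a). pose proof (Cmod_pos c).
  destruct (QC_approx c (Rmin 1 (eps / (2 * (norm a + 1))))) as [q Hq].
  { apply Rmin_glb_lt; [lra|apply Rdiv_lt_0_compat; lra]. }
  destruct (Ha (eps / (2 * (Cmod c + 2)))) as [P [HP1 HP2]]; [apply Rdiv_lt_0_compat; lra|].
  exists (PMul (PConst q) P); split; simpl; auto.
  rewrite mul_scall, mul_onel. apply cdist_scal_lt; auto.
Qed.
Lemma papprox_mul a b : papprox p y a -> papprox p y b -> papprox p y (mul a b).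
Proof.
  intros Ha Hb eps He. pose proof (norm_nonneg Alg a). pose proof (norm_nonneg Alg b).
  destruct (Ha (eps / (2 * (norm b + 2)))) as [P [HP1 HP2]]; [apply Rdiv_lt_0_compat; lra|].
  destruct (Hb (Rmin 1 (eps / (2 * (norm a + 1))))) as [Q [HQ1 HQ2]].
  { apply Rmin_glb_lt; [lra|apply Rdiv_lt_0_compat; lra]. }
  exists (PMul P Q); split; simpl; auto. apply cdist_mul_lt; auto.
Qed.
Lemma papprox_star a : (forall i, (i < p)%nat -> star (y i) = y i) ->
  papprox p y a -> papprox p y (star a).
Proof.
  intros Hy Ha eps He. destruct (Ha eps He) as [P [HP1 HP2]].
  exists (pstar P); split; [apply pstar_wf; auto|].
  rewrite <- (evalA_star p) by auto. rewrite cdist_star; auto.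
Qed.
Lemma papprox_closed a : (forall eps, 0 < eps -> exists b, papprox p y b /\ cdist a b < eps) -> papprox p y a.
Proof.
  intros Ha eps He. destruct (Ha (eps/2)) as [b [Hb1 Hb2]]; [lra|].
  destruct (Hb1 (eps/2)) as [P [HP1 HP2]]; [lra|].
  exists P; split; auto. eapply Rle_lt_trans; [apply (cdist_tri Alg _ b)|lra].
Qed.

Lemma gen_papprox a : (forall i, (i < p)%nat -> star (y i) = y i) -> generated p y a -> papprox p y a.
Proof.
  intros Hy Hg. apply Hg.
  - repeat split; auto using papprox_one, papprox_add, papprox_scal, papprox_mul, papprox_star, papprox_closed.
  - intros i Hi eps He. exists (PVar i); split; simpl; auto. rewrite cdist_self; auto.
Qed.
End Density.

Lemma evalA_cont (Alg : CStarAlgebra) n P (x : nat -> Alg) : wf n P -> forall eta, 0 < eta -> exists d, 0 < d /\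
  forall z, (forall i, (i < n)%nat -> cdist (z i) (x i) < d) -> cdist (evalA z P) (evalA x P) < eta.
Proof.
  intros Hw. induction P as [i|c|P1 IH1 P2 IH2|P1 IH1 P2 IH2]; simpl in *; intros eta He.
  - exists eta; split; auto.
  - exists 1; split; [lra|]. intros; rewrite cdist_self; auto.
  - destruct Hw as [W1 W2].
    destruct (IH1 W1 (eta/2)) as [d1 [Hd1 H1]]; [lra|]. destruct (IH2 W2 (eta/2)) as [d2 [Hd2 H2]]; [lra|].
    exists (Rmin d1 d2); split; [apply Rmin_glb_lt; auto|].
    intros z Hz. eapply Rle_lt_trans; [apply cdist_add|].
    assert (cdist (evalA z P1) (evalA x P1) < eta / 2)
      by (apply H1; intros; eapply Rlt_le_trans; [apply Hz; auto|apply Rmin_l]).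
    assert (cdist (evalA z P2) (evalA x P2) < eta / 2)
      by (apply H2; intros; eapply Rlt_le_trans; [apply Hz; auto|apply Rmin_r]).
    lra.
  - destruct Hw as [W1 W2].
    pose proof (norm_nonneg Alg (evalA x P1)). pose proof (norm_nonneg Alg (evalA x P2)).
    destruct (IH1 W1 (eta / (2 * (norm (evalA x P2) + 2)))) as [d1 [Hd1 H1]]; [apply Rdiv_lt_0_compat; lra|].
    destruct (IH2 W2 (Rmin 1 (eta / (2 * (norm (evalA x P1) + 1))))) as [d2 [Hd2 H2]].
    { apply Rmin_glb_lt; [lra|apply Rdiv_lt_0_compat; lra]. }
    exists (Rmin d1 d2); split; [apply Rmin_glb_lt; auto|].
    intros z Hz. rewrite cdist_sym. apply cdist_mul_lt; auto; rewrite cdist_sym.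
    + apply H1; intros; eapply Rlt_le_trans; [apply Hz; auto|apply Rmin_l].
    + apply H2; intros; eapply Rlt_le_trans; [apply Hz; auto|apply Rmin_r].
Qed.

Lemma cont_family (Alg : CStarAlgebra) n (x : nat -> Alg) m (F : nat -> ncpoly) eta :
  (forall i, (i < m)%nat -> wf n (F i)) -> 0 < eta -> exists d, 0 < d /\
  forall z, (forall l, (l < n)%nat -> cdist (z l) (x l) < d) ->
    forall i, (i < m)%nat -> cdist (evalA z (F i)) (evalA x (F i)) < eta.
Proof.
  intros Hw He. induction m.
  - exists 1; split; [lra|]. intros; lia.
  - destruct IHm as [d1 [Hd1 H1]]. { intros; apply Hw; lia. }
    destruct (evalA_cont Alg n (F m) x (Hw m ltac:(lia)) eta He) as [d2 [Hd2 H2]].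
    exists (Rmin d1 d2); split; [apply Rmin_glb_lt; auto|].
    intros z Hz i Hi. destruct (Nat.eq_dec i m).
    + subst. apply H2. intros; eapply Rlt_le_trans; [apply Hz; auto|apply Rmin_r].
    + apply H1; try lia. intros; eapply Rlt_le_trans; [apply Hz; auto|apply Rmin_l].
Qed.

Lemma symp_cdist (Alg : CStarAlgebra) p (y : nat -> Alg) (a : Alg) P :
  (forall i, (i < p)%nat -> star (y i) = y i) -> wf p P -> star a = a ->
  cdist a (evalA y (symp P)) <= cdist a (evalA y P).
Proof.
  intros Hy Hw Ha. simpl. rewrite <- (evalA_star Alg p) by auto.
  rewrite mul_scall, mul_onel, QtoC_half.
  assert (Ea : a = scal (/2, 0) (add a (star a))).
  { rewrite Ha, scal_addr, <- scal_addl. rewrite <- (scal_one Alg a) at 1.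
    f_equal. apply Cext; unfold Cadd, C1; simpl; field. }
  rewrite Ea at 1. eapply Rle_trans; [apply cdist_scal|].
  replace (Cadd (/ 2, 0) (Cmul (-1, 0) (/ 2, 0))) with C0 by (apply Cext; unfold Cadd, Cmul, C0; simpl; field).
  rewrite Cmod_C0, Rmult_0_l, Rplus_0_l.
  replace (Cmod (/2, 0)) with (/2) by (change (/2, 0) with (RtoC (/2)); rewrite Cmod_RtoC, Rabs_right; lra).
  eapply Rle_trans; [apply Rmult_le_compat_l; [lra|apply cdist_add]|].
  rewrite cdist_star. lra.
Qed.

(** * Comparing covering numbers of microstate spaces *)

Lemma index_family E (HE : enumeration E) n m (F : nat -> ncpoly) :
  (forall i, (i < m)%nat -> wf n (F i)) ->
  exists R, forall i, (i < m)%nat -> exists l, (l < R)%nat /\ E n l = F i.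
Proof.
  intro Hw. induction m.
  - exists 0%nat; intros; lia.
  - destruct IHm as [R1 H1]. { intros; apply Hw; lia. }
    destruct (proj2 (HE n) (F m) (Hw m ltac:(lia))) as [l Hl].
    exists (Nat.max R1 (S l)). intros i Hi. destruct (Nat.eq_dec i m).
    + subst. exists l; split; auto; lia.
    + destruct (H1 i ltac:(lia)) as [l' [Hl' El']]. exists l'; split; auto; lia.
Qed.

Lemma logratio_mono N1 N2 k : (1 <= k)%nat -> (N1 <= N2)%nat -> Rbar_le (logratio N1 k) (logratio N2 k).
Proof.
  intros Hk HN. unfold logratio. destruct N1; [simpl; auto|]. destruct N2; [lia|].
  change (ln (INR (S N1)) / INR (k * k) <= ln (INR (S N2)) / INR (k * k)).
  assert (0 < INR (k * k)) by (apply lt_0_INR; nia).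
  unfold Rdiv. apply Rmult_le_compat_r; [left; apply Rinv_0_lt_compat; auto|].
  destruct (Rle_lt_or_eq _ _ (le_INR _ _ HN)) as [Hl|Hl].
  - left; apply ln_increasing; auto. apply lt_0_INR; lia.
  - rewrite Hl; lra.
Qed.

(* Pulling each centre B of a
   minimal om2-cover of Gx back along Q, and using that Q is Lipschitz and
   commutes with unitary conjugation, gives an om-cover of Gy with no more
   balls, provided the error budget below is met. *)
Lemma o2_pullback k n p (Gx Gy : MTuple -> Prop) (Phi : MTuple -> MTuple) (Q : nat -> ncpoly)
  (M om om2 delta : R) :
  0 <= M -> 0 < om2 -> (forall i, (i < p)%nat -> wf n (Q i)) ->
  (forall A, Gx A -> forall l, (l < n)%nat -> opnorm k (A l) <= M) ->
  (forall A, Gy A -> Gx (Phi A)) ->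
  (forall A, Gy A -> forall i, (i < p)%nat -> opnorm k (Msub (A i) (evalM k (Phi A) (Q i))) <= delta) ->
  Rsum p (fun i => delta + plip (Q i) M * om2) < om / 2 ->
  (o2 k p Gy om <= o2 k n Gx om2)%nat.
Proof.
  intros HM Hom2 HQw Hbd HPhi Happ Hsum.
  assert (Hent : forall A, Gx A -> forall l a b, (l < n)%nat -> (a < k)%nat -> (b < k)%nat -> Cmod (A l a b) <= M)
    by (intros A HA l a b Hl Ha Hb; apply Rle_trans with (opnorm k (A l)); [apply op_entry|apply Hbd]; auto).
  destruct (finite_cover k n Gx M om2 HM Hom2 Hent) as [N0 HN0].
  destruct (o2_spec k n Gx om2 N0 HN0) as [[Lx [HLx1 [HLx2 HLx3]]] _].
  set (near := fun (B A : MTuple) => Gy A /\ orbit_ball k p (om/2) (fun i => evalM k B (Q i)) A).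
  destruct (build_cover_o2 k p Gy om Lx near) as [N' [HN' HN'le]].
  - intros B A A' [_ H1] [_ H2]. replace om with (om/2 + om/2) by field. eapply orbit_tri; eauto.
  - intros A HA. destruct (HLx3 (Phi A) (HPhi A HA)) as [B [HB [W [HW HBW]]]].
    exists B; split; auto. split; auto. exists W; split; auto.
    eapply Rle_lt_trans; [apply norm2_le_sum|]. eapply Rle_lt_trans; [|apply Hsum].
    apply Rsum_le. intros i Hi. unfold Tsub. fold (Msub (A i) (conj k W (evalM k B (Q i)))).
    eapply Rle_trans; [apply (hs_sub_tri k _ (evalM k (Phi A) (Q i)))|]. apply Rplus_le_compat.
    + eapply Rle_trans; [apply hs_le_op|apply Happ; auto].
    + rewrite (hs_ext k _ (Msub (evalM k (Phi A) (Q i)) (evalM k (fun l => conj k W (B l)) (Q i))))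
        by (apply Msub_compat; [mrefl|apply meq_sym, (evalM_conj k n); auto]).
      eapply Rle_trans; [apply (evalM_lip k n (Q i) _ _ M); auto|].
      * intros l Hl. split; [apply Hbd; auto|].
        eapply Rle_trans; [apply op_conj; auto|apply Hbd; auto].
      * apply Rmult_le_compat_l; [apply plip_pos; auto|left; apply HBW].
  - destruct (o2_spec k p Gy om N' HN') as [_ Hle]. lia.
Qed.

Lemma gamma_cond {Alg : CStarAlgebra} E k n (z : nat -> Alg) Rb eps r A F l :
  Gamma_top E n z Rb k eps r A -> (l < r)%nat -> E n l = F ->
  Rabs (opnorm k (evalM k A F) - norm (evalA z F)) <= eps.
Proof. intros [_ H] Hl <-. apply H; auto. Qed.

Section Pushforward.
Variable Alg : CStarAlgebra.
Variable E : nat -> nat -> ncpoly.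
Variables p n : nat.
Variables y x : nat -> Alg.

(* S_l = symp (R_l) is a self-adjoint polynomial in y approximating x_l. *)
Variable R0 : nat -> ncpoly.
Hypothesis HRw : forall l, (l < n)%nat -> wf p (R0 l).
Let Spol := fun l => symp (R0 l).
Let Sy := fun l => evalA y (Spol l).

(* A microstate A of y (for enough moments) is mapped by S = (S_l)_l to a
   microstate of x: the norms of S_l(A) are controlled by those of
   S_l(y) ~ x_l, and the moments of S(A) are moments of A, hence close to
   those of S(y) ~ x. *)
Lemma gamma_pushforward k Rb M eps r eps' r' :
  (forall l, (l < n)%nat -> exists m, (m < r')%nat /\ E p m = Spol l) ->
  (forall l, (l < r)%nat -> exists m, (m < r')%nat /\ E p m = psubst Spol (E n l)) ->
  (forall l, (l < n)%nat -> norm (Sy l) + eps' <= M) ->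
  (forall l, (l < r)%nat -> Rabs (norm (evalA Sy (E n l)) - norm (evalA x (E n l))) + eps' <= eps) ->
  forall A, Gamma_top E p y Rb k eps' r' A -> Gamma_top E n x M k eps r (fun l => evalM k A (Spol l)).
Proof.
  intros HiS HiE HnS HmS A HA. split.
  - intros l Hl. split.
    + apply (symp_sa k p); [apply HRw; auto|]. intros; apply HA; auto.
    + destruct (HiS l Hl) as [m [Hm Em]].
      pose proof (gamma_cond E k p y Rb eps' r' A (Spol l) m HA Hm Em) as H.
      apply Rabs_le_inv in H. specialize (HnS l Hl). unfold Sy in HnS. lra.
  - intros l Hl. destruct (HiE l Hl) as [m [Hm Em]].
    pose proof (gamma_cond E k p y Rb eps' r' A _ m HA Hm Em) as H.
    rewrite (op_ext k _ _ (evalM_subst k Spol (E n l) A)), evalA_subst in H. fold Sy in H.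
    eapply Rle_trans; [apply (Rabs_tri3 _ (norm (evalA Sy (E n l))))|].
    specialize (HmS l Hl). lra.
Qed.

Lemma gamma_approx k Rb eps' r' i Q :
  (exists m, (m < r')%nat /\ E p m = PAdd (PVar i) (PMul (PConst ((-1)%Q, 0%Q)) (psubst Spol Q))) ->
  forall A, Gamma_top E p y Rb k eps' r' A ->
  opnorm k (Msub (A i) (evalM k (fun l => evalM k A (Spol l)) Q)) <= cdist (y i) (evalA Sy Q) + eps'.
Proof.
  intros [m [Hm Em]] A HA.
  pose proof (gamma_cond E k p y Rb eps' r' A _ m HA Hm Em) as H. simpl in H.
  replace (QtoC ((-1)%Q, 0%Q)) with ((-1), 0) in H by (unfold QtoC, Q2R; simpl; apply Cext; simpl; field).
  rewrite mul_scall, mul_onel, <- opp_scal, evalA_subst in H. fold Sy in H.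
  fold (cdist (y i) (evalA Sy Q)) in H.
  rewrite (op_ext k _ (Msub (A i) (evalM k (fun l => evalM k A (Spol l)) Q))) in H.
  - apply Rabs_le_inv in H. lra.
  - intros a b Ha Hb. unfold Msub, Madd. rewrite Mmul_Mscal_l. unfold Mscal.
    rewrite (Mmul_Mid_l k _ a b Ha Hb), (evalM_subst k Spol Q A a b Ha Hb). reflexivity.
Qed.
End Pushforward.

Lemma symmetric_approximants (Alg : CStarAlgebra) p (y : nat -> Alg) n (x : nat -> Alg) d :
  (forall i, (i < p)%nat -> star (y i) = y i) -> (forall a : Alg, generated p y a) ->
  (forall l, (l < n)%nat -> star (x l) = x l) -> 0 < d ->
  exists R0, forall l, (l < n)%nat -> wf p (R0 l) /\ cdist (evalA y (symp (R0 l))) (x l) < d.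
Proof.
  intros Hy Hgen Hx Hd.
  destruct (fin_choice (PVar 0) n (fun l P => wf p P /\ cdist (x l) (evalA y P) < d)) as [R0 HR0].
  { intros l Hl. apply (gen_papprox Alg p y (x l) Hy (Hgen (x l)) d Hd). }
  exists R0. intros l Hl. destruct (HR0 l Hl) as [Hw Hc]. split; auto.
  rewrite cdist_sym. eapply Rle_lt_trans; [apply (symp_cdist Alg p); auto|exact Hc].
Qed.

Section Comparison.
Variable Alg : CStarAlgebra.
Variable E : nat -> nat -> ncpoly.
Hypothesis HE : enumeration E.
Variable p : nat.
Variable y : nat -> Alg.
Hypothesis Hy_sa : forall i, (i < p)%nat -> star (y i) = y i.
Hypothesis Hy_gen : forall a : Alg, generated p y a.

Lemma transfer_approximants (n : nat) (x : nat -> Alg) (Hx : forall i, (i < n)%nat -> star (x i) = x i)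
  (Q : nat -> ncpoly) (eta eps : R) (r : nat)
  (HQw : forall i, (i < p)%nat -> wf n (Q i)) (Heta : 0 < eta)
  (HQ : forall i, (i < p)%nat -> cdist (y i) (evalA x (Q i)) < eta) (Heps : 0 < eps) :
  exists R0 : nat -> ncpoly,
    (forall l, (l < n)%nat -> wf p (R0 l) /\ norm (evalA y (symp (R0 l))) <= norm (x l) + 1/2) /\
    (forall l, (l < r)%nat ->
       Rabs (norm (evalA (fun l => evalA y (symp (R0 l))) (E n l)) - norm (evalA x (E n l))) < eps / 2) /\
    (forall i, (i < p)%nat -> cdist (y i) (evalA (fun l => evalA y (symp (R0 l))) (Q i)) < 2 * eta).
Proof.
  destruct (cont_family Alg n x r (E n) (eps/2)) as [d1 [Hd1 Hc1]]; [intros; apply HE|lra|].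
  destruct (cont_family Alg n x p Q eta) as [d2 [Hd2 Hc2]]; auto.
  set (d := Rmin (Rmin d1 d2) (1/2)).
  assert (Hd : 0 < d) by (apply Rmin_glb_lt; [apply Rmin_glb_lt|]; lra).
  assert (Hd1' : d <= d1) by (eapply Rle_trans; [apply Rmin_l|apply Rmin_l]).
  assert (Hd2' : d <= d2) by (eapply Rle_trans; [apply Rmin_l|apply Rmin_r]).
  assert (Hd3 : d <= 1/2) by apply Rmin_r.
  destruct (symmetric_approximants Alg p y n x d Hy_sa Hy_gen Hx Hd) as [R0 HR0].
  set (Sy := fun l => evalA y (symp (R0 l))).
  assert (HSy : forall l, (l < n)%nat -> cdist (Sy l) (x l) < d) by (intros; apply HR0; auto).
  exists R0. split; [|split].
  - intros l Hl. split; [apply HR0; auto|].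
    pose proof (norm_rev Alg (Sy l) (x l)) as Hn. apply Rabs_le_inv in Hn.
    pose proof (HSy l Hl). change (norm (Sy l) <= norm (x l) + 1/2). lra.
  - intros l Hl. eapply Rle_lt_trans; [apply norm_rev|].
    apply Hc1; auto. intros; eapply Rlt_le_trans; [apply HSy; auto|lra].
  - intros i Hi. eapply Rle_lt_trans; [apply (cdist_tri Alg _ (evalA x (Q i)))|].
    rewrite (cdist_sym _ (evalA x (Q i))).
    change (cdist (y i) (evalA x (Q i)) + cdist (evalA Sy (Q i)) (evalA x (Q i)) < 2 * eta).
    assert (cdist (evalA Sy (Q i)) (evalA x (Q i)) < eta)
      by (apply Hc2; auto; intros; eapply Rlt_le_trans; [apply HSy; auto|lra]).
    pose proof (HQ i Hi). lra.
Qed.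

Lemma transfer (n : nat) (x : nat -> Alg) (Hx : forall i, (i < n)%nat -> star (x i) = x i)
  (Q : nat -> ncpoly) (eta M om om2 Rb eps : R) (r : nat)
  (HQw : forall i, (i < p)%nat -> wf n (Q i)) (Heta : 0 < eta)
  (HQ : forall i, (i < p)%nat -> cdist (y i) (evalA x (Q i)) < eta)
  (HM : forall i, (i < n)%nat -> norm (x i) + 1 <= M) (HM0 : 0 <= M) (Hom2 : 0 < om2)
  (Hsum : Rsum p (fun i => 3 * eta + plip (Q i) M * om2) < om / 2)
  (Heps : 0 < eps) :
  exists eps' r', 0 < eps' /\ (1 <= r')%nat /\ forall k, (1 <= k)%nat ->
    Rbar_le (logratio (o2 k p (Gamma_top E p y Rb k eps' r') om) k)
            (logratio (o2 k n (Gamma_top E n x M k eps r) om2) k).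
Proof.
  destruct (transfer_approximants n x Hx Q eta eps r HQw Heta HQ Heps) as [R0 [HR0 [HS1 HS2]]].
  set (Spol := fun l => symp (R0 l)).
  (* the y-side moments needed: S_l, the S-images of the x-moments, and y_i - Q_i(S) *)
  destruct (index_family E HE p n Spol) as [Ra HRa]; [intros; apply symp_wf, HR0; auto|].
  destruct (index_family E HE p r (fun l => psubst Spol (E n l))) as [Rb' HRb].
  { intros l Hl. apply (psubst_wf n); [apply HE|intros; apply symp_wf, HR0; auto]. }
  destruct (index_family E HE p p (fun i => PAdd (PVar i) (PMul (PConst ((-1)%Q, 0%Q)) (psubst Spol (Q i)))))
    as [Rc HRc].
  { intros i Hi. simpl. repeat split; auto. apply (psubst_wf n); auto. intros; apply symp_wf, HR0; auto. }
  set (eps' := Rmin (Rmin (eps/2) eta) (1/2)).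
  assert (He' : 0 < eps') by (apply Rmin_glb_lt; [apply Rmin_glb_lt|]; lra).
  assert (He1 : eps' <= eps/2) by (eapply Rle_trans; [apply Rmin_l|apply Rmin_l]).
  assert (He2 : eps' <= eta) by (eapply Rle_trans; [apply Rmin_l|apply Rmin_r]).
  assert (He3 : eps' <= 1/2) by apply Rmin_r.
  set (r' := Nat.max (Nat.max Ra Rb') (Nat.max Rc 1)).
  exists eps', r'. split; auto. split; [unfold r'; lia|].
  intros k Hk. apply logratio_mono; auto.
  apply (o2_pullback k n p _ _ (fun A l => evalM k A (Spol l)) Q M om om2 (3 * eta)); auto.
  - intros A HA l Hl. apply HA; auto.
  - apply (gamma_pushforward Alg E p n y x R0); [intros; apply HR0; auto|..].
    + intros l Hl. destruct (HRa l Hl) as [m [Hm Em]]. exists m; split; auto. unfold r'; lia.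
    + intros l Hl. destruct (HRb l Hl) as [m [Hm Em]]. exists m; split; auto. unfold r'; lia.
    + intros l Hl. pose proof (HR0 l Hl). pose proof (HM l Hl). lra.
    + intros l Hl. pose proof (HS1 l Hl). lra.
  - intros A HA i Hi. eapply Rle_trans.
    + apply (gamma_approx Alg E p y R0 k Rb eps' r'); [|exact HA].
      destruct (HRc i Hi) as [m [Hm Em]]. exists m; split; auto. unfold r'; lia.
    + pose proof (HS2 i Hi). lra.
Qed.

(* At fixed scales om and om2 (with the budget), the orbit dimension of y is
   at most that of x: take R = M on the x side and apply the transfer lemma
   to every (eps, r). *)
Lemma Ktop_omega_compare (n : nat) (x : nat -> Alg) (Hx : forall i, (i < n)%nat -> star (x i) = x i)
  (Q : nat -> ncpoly) (eta M om om2 : R)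
  (HQw : forall i, (i < p)%nat -> wf n (Q i)) (Heta : 0 < eta)
  (HQ : forall i, (i < p)%nat -> cdist (y i) (evalA x (Q i)) < eta)
  (HM : forall i, (i < n)%nat -> norm (x i) + 1 <= M) (HM1 : 0 < M) (Hom2 : 0 < om2)
  (Hsum : Rsum p (fun i => 3 * eta + plip (Q i) M * om2) < om / 2) :
  Rbar_le (Ktop_omega E p y om) (Ktop_omega E n x om2).
Proof.
  unfold Ktop_omega at 1. apply sup_le. intros v [Rb [HRb ->]].
  eapply Rbar_le_trans; [|apply le_sup; exists M; split; [lra|reflexivity]].
  apply le_inf. intros w [eps [r [Heps [Hr ->]]]].
  destruct (transfer n x Hx Q eta M om om2 Rb eps r HQw Heta HQ HM ltac:(lra) Hom2 Hsum Heps)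
    as [eps' [r' [He' [Hr' Hk]]]].
  eapply Rbar_le_trans; [apply inf_le; exists eps', r'; split; [exact He'|split; [exact Hr'|reflexivity]]|].
  apply limsup_mono. auto.
Qed.
End Comparison.

(* K(x) is an infimum over delta of suprema over om < delta, so it dominates
   any v lying below K(x; om2) for all small om2. *)
Lemma Ktop_lower_bound {Alg : CStarAlgebra} E n (x : nat -> Alg) v w0 : 0 < w0 ->
  (forall om2, 0 < om2 <= w0 -> Rbar_le v (Ktop_omega E n x om2)) -> Rbar_le v (Ktop E n x).
Proof.
  intros Hw0 H. unfold Ktop. apply le_inf. intros w [d [Hd ->]].
  assert (Hm : 0 < Rmin d w0) by (apply Rmin_glb_lt; auto).
  pose proof (Rmin_l d w0). pose proof (Rmin_r d w0).
  eapply Rbar_le_trans; [apply (H (Rmin d w0 / 2)); lra|].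
  apply le_sup. exists (Rmin d w0 / 2). split; [lra|reflexivity].
Qed.

(* The numerical choices: with eta = om / (16 (p + 1)) and om2 small
   compared to the total Lipschitz constant, the error budget is met. *)
Lemma error_budget p (L : nat -> R) om om2 : 0 < om -> (forall i, (i < p)%nat -> 0 <= L i) ->
  0 < om2 -> om2 <= om / (4 * (Rsum p L + 1)) ->
  Rsum p (fun i => 3 * (om / (16 * (INR p + 1))) + L i * om2) < om / 2.
Proof.
  intros Hom HL Ho2 Ho2'. pose proof (pos_INR p).
  assert (HLp : 0 <= Rsum p L) by (apply Rsum_nonneg; auto).
  rewrite Rsum_plus, Rsum_const, <- Rsum_mul_r.
  assert (INR p * (3 * (om / (16 * (INR p + 1)))) < 3 * om / 16).
  { replace (INR p * (3 * (om / (16 * (INR p + 1))))) with (3 * om / 16 * (INR p / (INR p + 1))) by (field; lra).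
    assert (INR p / (INR p + 1) < 1).
    { unfold Rdiv. apply Rmult_lt_reg_r with (INR p + 1); [lra|]. rewrite Rmult_assoc, Rinv_l; lra. }
    assert (0 <= INR p / (INR p + 1)) by (apply Rmult_le_pos; [lra|left; apply Rinv_0_lt_compat; lra]).
    nra. }
  assert (Rsum p L * om2 <= om / 4 * (Rsum p L / (Rsum p L + 1))).
  { apply Rle_trans with (Rsum p L * (om / (4 * (Rsum p L + 1)))); [apply Rmult_le_compat_l; auto|].
    right; field; lra. }
  assert (Rsum p L / (Rsum p L + 1) < 1).
  { unfold Rdiv. apply Rmult_lt_reg_r with (Rsum p L + 1); [lra|]. rewrite Rmult_assoc, Rinv_l; lra. }
  nra.
Qed.

Section DenseUnion.
Variable Alg : CStarAlgebra.
Variable Sub : nat -> Alg -> Prop.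
Hypothesis Hinc : forall j a, Sub j a -> Sub (S j) a.
Hypothesis Hdense : forall (a : Alg) eps, 0 < eps -> exists j b, Sub j b /\ cdist a b < eps.
Variable n : nat -> nat.
Variable x : nat -> nat -> Alg.
Hypothesis Hx_sa : forall j i, (i < n j)%nat -> star (x j i) = x j i.
Hypothesis Hx_gen : forall j a, Sub j a <-> generated (n j) (x j) a.

Lemma eventual_polynomial_approx p (y : nat -> Alg) eta : 0 < eta ->
  exists J, forall j, (J <= j)%nat -> exists Q : nat -> ncpoly,
    forall i, (i < p)%nat -> wf (n j) (Q i) /\ cdist (y i) (evalA (x j) (Q i)) < eta.
Proof.
  intros He.
  destruct (eventually_all p (fun i j => exists P, wf (n j) P /\ cdist (y i) (evalA (x j) P) < eta)) as [J HJ].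
  - intros i Hi. destruct (Hdense (y i) (eta/2)) as [j0 [b [Hb1 Hb2]]]; [lra|].
    exists j0. intros j Hj. assert (Hb : Sub j b) by (induction Hj; auto).
    apply Hx_gen in Hb. destruct (gen_papprox Alg (n j) (x j) b (Hx_sa j) Hb (eta/2)) as [P [HP1 HP2]]; [lra|].
    exists P; split; auto. eapply Rle_lt_trans; [apply (cdist_tri Alg _ b)|lra].
  - exists J. intros j Hj.
    apply (fin_choice (PVar 0) p (fun i P => wf (n j) P /\ cdist (y i) (evalA (x j) P) < eta)).
    apply HJ; auto.
Qed.

Lemma Ktop_omega_le_eventually E (HE : enumeration E) p (y : nat -> Alg)
  (Hy_sa : forall i, (i < p)%nat -> star (y i) = y i) (Hy_gen : forall a : Alg, generated p y a) om :
  0 < om -> exists J, forall j, (J <= j)%nat -> Rbar_le (Ktop_omega E p y om) (Ktop E (n j) (x j)).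
Proof.
  intros Hom. set (eta := om / (16 * (INR p + 1))).
  assert (Heta : 0 < eta) by (unfold eta; pose proof (pos_INR p); apply Rdiv_lt_0_compat; lra).
  destruct (eventual_polynomial_approx p y eta Heta) as [J HJ]. exists J. intros j Hj.
  destruct (HJ j Hj) as [Q HQ].
  set (M := Rsum (n j) (fun i => norm (x j i)) + 1).
  assert (HN : forall i, (i < n j)%nat -> 0 <= norm (x j i)) by (intros; apply norm_nonneg).
  assert (HM : forall i, (i < n j)%nat -> norm (x j i) + 1 <= M)
    by (intros i Hi; pose proof (Rsum_term_le _ _ i HN Hi); unfold M; lra).
  assert (HM1 : 0 < M) by (pose proof (Rsum_nonneg _ _ HN); unfold M; lra).
  set (Lp := Rsum p (fun i => plip (Q i) M)).
  assert (HL : 0 <= Lp) by (apply Rsum_nonneg; intros; apply plip_pos; lra).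
  apply (Ktop_lower_bound E (n j) (x j) _ (om / (4 * (Lp + 1)))); [apply Rdiv_lt_0_compat; lra|].
  intros om2 [Ho2 Ho2'].
  apply (Ktop_omega_compare Alg E HE p y Hy_sa Hy_gen (n j) (x j) (Hx_sa j) Q eta M om om2); auto.
  - intros i Hi; apply HQ; auto.
  - intros i Hi; apply HQ; auto.
  - apply error_budget; auto. intros; apply plip_pos; lra.
Qed.
End DenseUnion.

Theorem theorem3p3 (Alg : CStarAlgebra) (E : nat -> nat -> ncpoly)
  (HE : enumeration E)
  (p : nat) (y : nat -> Alg)
  (Hy_sa : forall i, (i < p)%nat -> star (y i) = y i)
  (Hy_gen : forall a : Alg, generated p y a)
  (Sub : nat -> Alg -> Prop)
  (HSub : forall j, is_unital_csub (Sub j))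
  (Hinc : forall j a, Sub j a -> Sub (S j) a)
  (Hdense : forall (a : Alg) eps, 0 < eps -> exists j b, Sub j b /\ cdist a b < eps)
  (n : nat -> nat) (x : nat -> nat -> Alg)
  (Hx_sa : forall j i, (i < n j)%nat -> star (x j i) = x j i)
  (Hx_gen : forall j a, Sub j a <-> generated (n j) (x j) a) :
  Rbar_le (Ktop E p y) (Rbar_liminf_seq (fun j => Ktop E (n j) (x j))).
Proof.
  (* K(y) <= sup_{0 < om < 1} K(y; om), and each K(y; om) is eventually below
     K(x^(j)), hence below the liminf. *)
  unfold Ktop at 1. eapply Rbar_le_trans; [apply inf_le; exists 1; split; [lra|reflexivity]|].
  apply sup_le. intros v [om [Hom ->]].
  destruct (Ktop_omega_le_eventually Alg Sub Hinc Hdense n x Hx_sa Hx_gen E HE p y Hy_sa Hy_gen om)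
    as [J HJ]; [lra|].
  unfold Rbar_liminf_seq. eapply Rbar_le_trans; [|apply le_sup; exists J; reflexivity].
  apply le_inf. intros w [k [Hk ->]]. apply HJ; auto.
Qed.
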